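(* Let $n\ge 1$ and let $\omega_1,\dots,\omega_n\in\mathbb{C}$ be pairwise distinct complex numbers, none of which lies on the real segment $[0,1]$. Let $n_1,\dots,n_n\ge 1$ be integers and set $h(\omega)=\prod_{i=1}^{n}(\omega-\omega_i)^{n_i}$. For a nonnegative integer $m$ define $$g_m(\omega)=\omega^m\Big(\log\big(1-\tfrac{1}{\omega}\big)+\sum_{k=1}^{m}\frac{1}{k\,\omega^k}\Big),\qquad G_m(\omega)=\frac{g_m(\omega)}{h(\omega)},$$ where $\log$ denotes the principal branch of the logarithm (so that $g_m$, and hence $G_m$ away from the zeros of $h$, is single-valued and holomorphic on $\mathbb{C}\setminus[0,1]$). Then $$\int_0^1 \frac{x^m}{h(x)}\,dx=\sum_{i=1}^{n}\operatorname{Res}\big(G_m,\omega_i\big).$$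
   Context: $\operatorname{Res}(G,\omega_i)$ denotes the residue of the meromorphic function $G$ at the point $\omega_i$. The empty sum (for $m=0$) is $0$. *)

From Stdlib Require Import Reals.
From Coquelicot Require Export Coquelicot.
Open Scope R_scope.

(* finite sums / products over indices 0 <= k < n *)
Fixpoint Csum (n : nat) (f : nat -> C) : C :=
  match n with O => RtoC 0 | S k => Cplus (Csum k f) (f k) end.
Fixpoint Cprod (n : nat) (f : nat -> C) : C :=
  match n with O => RtoC 1 | S k => Cmult (Cprod k f) (f k) end.

(* principal argument, with values in (-PI, PI] (0 at z = 0) *)
Definition Carg (z : C) : R :=
  let x := fst z in let y := snd z in
  if Rlt_dec 0 x then atan (y / x)
  else if Rlt_dec x 0 then
    (if Rle_dec 0 y then atan (y / x) + PI else atan (y / x) - PI)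
  else if Rlt_dec 0 y then PI / 2
  else if Rlt_dec y 0 then - (PI / 2)
  else 0.

Definition Clog (z : C) : C := (ln (Cmod z), Carg z).

Definition Ceit (t : R) : C := (cos t, sin t).

(* [is_residue f a c]: c is the residue of f at the isolated singularity a,
   i.e. c = (1 / 2 pi i) * contour integral of f over |z - a| = r for all
   sufficiently small r > 0. *)
Definition is_residue (f : C -> C) (a c : C) : Prop :=
  exists eps : R, 0 < eps /\
    forall r : R, 0 < r < eps ->
      @is_RInt C_R_NormedModule
        (fun t : R => Cmult (f (Cplus a (Cmult (RtoC r) (Ceit t))))
                            (Cmult (Cmult (RtoC r) Ci) (Ceit t)))
        0 (2 * PI) (Cmult (Cmult (RtoC (2 * PI)) Ci) c).

Definition hpoly (n : nat) (w : nat -> C) (N : nat -> nat) (z : C) : C :=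
  Cprod n (fun i => Cpow (Cminus z (w i)) (N i)).

Definition g_m (m : nat) (z : C) : C :=
  Cmult (Cpow z m)
    (Cplus (Clog (Cminus (RtoC 1) (Cinv z)))
           (Csum m (fun k => Cinv (Cmult (RtoC (INR (S k))) (Cpow z (S k)))))).

Definition G_m (m n : nat) (w : nat -> C) (N : nat -> nat) (z : C) : C :=
  Cdiv (g_m m z) (hpoly n w N z).

From Stdlib Require Import Reals Lra Lia List ClassicalEpsilon.
From Coquelicot Require Import Coquelicot.
Open Scope R_scope.

(* For [z] off [0, 1], induction on [m] starting from the logarithm gives
   [g_m z = ∫_0^1 x^m / (x - z) dx], hence [G_m z = ∫_0^1 x^m / ((x - z) h z) dx].
   List the roots of [h] with multiplicity as [b_0, ..., b_(d-1)]. Moving the factors [z - b_j]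
   to [x - b_j] one at a time gives
     1 / ((x - z) h z) = 1 / ((x - z) h x) + Σ_k 1 / (Π_(j <= k) (x - b_j) Π_(j >= k) (z - b_j)).
   The first term, as a function of [z], only has a pole at [z = x], so by Fubini its integral
   over [0, 1] contributes nothing to the residues at the [ω_i]. The rest is the combination
   Σ_k a_k / Π_(j >= k) (z - b_j) with constant coefficients
   a_k = ∫_0^1 x^m / Π_(j <= k) (x - b_j) dx.
   By partial fractions, the residues of the reciprocal of a polynomial sum to [1] if it has
   degree one and to [0] otherwise, so the residues of [G_m] sum to
   [a_(d-1) = ∫_0^1 x^m / h x dx]. *)

(** * Complex-valued functions of a real variable *)

Lemma is_derive_eq (f : R -> R) (x l l' : R) : is_derive f x l -> l = l' -> is_derive f x l'.
Proof. now intros H <-. Qed.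

Lemma is_derive_Rconst (c t : R) : is_derive (fun _ => c) t 0.
Proof. apply (is_derive_const (K:=R_AbsRing) (V:=R_NormedModule)). Qed.

Lemma is_derive_Rid (t : R) : is_derive (fun s => s) t 1.
Proof. apply (is_derive_id (K:=R_AbsRing)). Qed.

Lemma is_derive_Rplus (f g : R -> R) t df dg : is_derive f t df -> is_derive g t dg ->
  is_derive (fun s => f s + g s) t (df + dg).
Proof. apply (is_derive_plus (K:=R_AbsRing) (V:=R_NormedModule)). Qed.

Lemma is_derive_Ropp (f : R -> R) t df : is_derive f t df -> is_derive (fun s => - f s) t (- df).
Proof. apply (is_derive_opp (K:=R_AbsRing) (V:=R_NormedModule)). Qed.

Lemma is_derive_Rminus (f g : R -> R) t df dg : is_derive f t df -> is_derive g t dg ->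
  is_derive (fun s => f s - g s) t (df - dg).
Proof. apply (is_derive_minus (K:=R_AbsRing) (V:=R_NormedModule)). Qed.

Lemma is_derive_Rmult (f g : R -> R) t df dg : is_derive f t df -> is_derive g t dg ->
  is_derive (fun s => f s * g s) t (df * g t + f t * dg).
Proof. intros Hf Hg; apply (is_derive_mult (K:=R_AbsRing)); auto; intros; apply Rmult_comm. Qed.

Lemma is_derive_Rcomp (f g : R -> R) t dg df : is_derive g t dg -> is_derive f (g t) df ->
  is_derive (fun s => f (g s)) t (dg * df).
Proof. intros Hg Hf; exact (is_derive_comp f g t df dg Hf Hg). Qed.

Section RealContinuity.
Context {U : UniformSpace}.

Lemma continuous_Rplus (f g : U -> R) x : continuous f x -> continuous g x ->
  continuous (fun s => f s + g s) x.
Proof. apply (continuous_plus (V:=R_NormedModule)). Qed.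

Lemma continuous_Ropp (f : U -> R) x : continuous f x -> continuous (fun s => - f s) x.
Proof. apply (continuous_opp (V:=R_NormedModule)). Qed.

Lemma continuous_Rminus (f g : U -> R) x : continuous f x -> continuous g x ->
  continuous (fun s => f s - g s) x.
Proof. apply (continuous_minus (V:=R_NormedModule)). Qed.

Lemma continuous_Rmult (f g : U -> R) x : continuous f x -> continuous g x ->
  continuous (fun s => f s * g s) x.
Proof. apply (continuous_mult (K:=R_AbsRing)). Qed.

Lemma continuous_Rinv (f : U -> R) x : continuous f x -> f x <> 0 ->
  continuous (fun s => / f s) x.
Proof. intros Hf Hx; apply (continuous_comp f Rinv); [exact Hf | now apply continuous_Rinv]. Qed.

End RealContinuity.

Definition is_cderive (f : R -> C) (t : R) (d : C) :=
  is_derive (fun s => Re (f s)) t (Re d) /\ is_derive (fun s => Im (f s)) t (Im d).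

Definition ccontinuous {U : UniformSpace} (f : U -> C) (x : U) :=
  continuous (fun s => Re (f s)) x /\ continuous (fun s => Im (f s)) x.

Notation is_CRInt := (@is_RInt C_R_NormedModule).

Lemma C_neq0_sqr (z : C) : z <> RtoC 0 -> Re z * Re z + Im z * Im z <> 0.
Proof.
  intros Hz E; apply Hz; destruct z as [x y]; unfold Re, Im in E; simpl in E.
  assert (x = 0) by nra; assert (y = 0) by nra; now subst.
Qed.

Lemma Cinv_components (z : C) :
  (/ z)%C = (Re z * / (Re z * Re z + Im z * Im z), - (Im z * / (Re z * Re z + Im z * Im z))).
Proof.
  destruct z as [x y]; unfold Cinv, Re, Im; simpl; unfold Rdiv.
  repeat rewrite Rmult_1_r; f_equal; ring.
Qed.

Lemma is_cderive_eq f t d d' : is_cderive f t d -> d = d' -> is_cderive f t d'.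
Proof. now intros H <-. Qed.

Lemma is_cderive_ext (f g : R -> C) t d :
  (forall s, f s = g s) -> is_cderive f t d -> is_cderive g t d.
Proof.
  intros E [H1 H2]; split;
    [apply (is_derive_ext (fun s => Re (f s))) | apply (is_derive_ext (fun s => Im (f s)))];
    intros; rewrite ?E; auto.
Qed.

Lemma is_cderive_const (c : C) t : is_cderive (fun _ => c) t (RtoC 0).
Proof. split; apply is_derive_Rconst. Qed.

Lemma is_cderive_RtoC t : is_cderive (fun s => RtoC s) t (RtoC 1).
Proof. split; simpl; [apply is_derive_Rid | apply is_derive_Rconst]. Qed.

Lemma is_cderive_plus f g t df dg : is_cderive f t df -> is_cderive g t dg ->
  is_cderive (fun s => f s + g s)%C t (df + dg)%C.
Proof. intros [F1 F2] [G1 G2]; split; apply is_derive_Rplus; auto. Qed.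

Lemma is_cderive_opp f t df : is_cderive f t df ->
  is_cderive (fun s => - f s)%C t (- df)%C.
Proof. intros [F1 F2]; split; apply is_derive_Ropp; auto. Qed.

Lemma is_cderive_minus f g t df dg : is_cderive f t df -> is_cderive g t dg ->
  is_cderive (fun s => f s - g s)%C t (df - dg)%C.
Proof. intros Hf Hg; apply is_cderive_plus; [exact Hf | now apply is_cderive_opp]. Qed.

Lemma is_cderive_mult f g t df dg : is_cderive f t df -> is_cderive g t dg ->
  is_cderive (fun s => f s * g s)%C t (df * g t + f t * dg)%C.
Proof.
  intros [F1 F2] [G1 G2]; split; simpl.
  - eapply is_derive_eq; [apply is_derive_Rminus; apply is_derive_Rmult; eauto|].
    unfold Re, Im; simpl; ring.
  - eapply is_derive_eq; [apply is_derive_Rplus; apply is_derive_Rmult; eauto|].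
    unfold Re, Im; simpl; ring.
Qed.

Lemma is_cderive_scal (c : C) f t df : is_cderive f t df ->
  is_cderive (fun s => c * f s)%C t (c * df)%C.
Proof.
  intros H; eapply is_cderive_eq; [apply is_cderive_mult; [apply is_cderive_const | exact H]|].
  cbv beta; ring.
Qed.

Lemma is_cderive_inv f t df : is_cderive f t df -> f t <> RtoC 0 ->
  is_cderive (fun s => / f s)%C t (- df / (f t * f t))%C.
Proof.
  intros [F1 F2] Hnz; pose proof (C_neq0_sqr _ Hnz) as Hq.
  set (q := fun s => Re (f s) * Re (f s) + Im (f s) * Im (f s)).
  assert (Dq : is_derive (fun s => / q s) t
                 (- (2 * (Re (f t) * Re df + Im (f t) * Im df)) / q t ^ 2)).
  { apply is_derive_inv; [|exact Hq].
    eapply is_derive_eq; [apply is_derive_Rplus; apply is_derive_Rmult; eauto|]; cbv beta; ring. }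
  split.
  - apply (is_derive_ext (fun s => Re (f s) * / q s)); [intro s; now rewrite Cinv_components|].
    eapply is_derive_eq; [apply is_derive_Rmult; eauto|].
    unfold q in *; destruct (f t) as [x y], df as [dx dy]; unfold Re, Im in *; simpl in *.
    field; split; [|exact Hq].
    replace (_ + _) with ((x * x + y * y) * (x * x + y * y)) by ring.
    now apply Rmult_integral_contrapositive.
  - apply (is_derive_ext (fun s => - (Im (f s) * / q s))); [intro s; now rewrite Cinv_components|].
    eapply is_derive_eq; [apply is_derive_Ropp, is_derive_Rmult; eauto|].
    unfold q in *; destruct (f t) as [x y], df as [dx dy]; unfold Re, Im in *; simpl in *.
    field; split; [|exact Hq].
    replace (_ + _) with ((x * x + y * y) * (x * x + y * y)) by ring.
    now apply Rmult_integral_contrapositive.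
Qed.

Lemma is_cderive_pow f t df k : is_cderive f t df ->
  is_cderive (fun s => f s ^ k)%C t (INR k * (f t ^ pred k * df))%C.
Proof.
  intros H; induction k as [|k IH].
  - apply (is_cderive_ext (fun _ => RtoC 1)); [reflexivity|].
    eapply is_cderive_eq; [apply is_cderive_const|]. change (INR 0) with 0. ring.
  - apply (is_cderive_ext (fun s => f s * f s ^ k)%C); [intro; now rewrite Cpow_S|].
    eapply is_cderive_eq; [apply (is_cderive_mult _ _ _ _ _ H IH)|].
    destruct k as [|k].
    + change (INR 1) with 1; change (INR 0) with 0; change (f t ^ 0)%C with (RtoC 1).
      simpl pred; ring.
    + rewrite (S_INR (S k)), RtoC_plus; simpl pred; rewrite Cpow_S; ring.
Qed.

Section ComplexContinuity.
Context {U : UniformSpace}.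

Lemma ccontinuous_ext (f g : U -> C) x :
  (forall s, f s = g s) -> ccontinuous f x -> ccontinuous g x.
Proof.
  intros E [H1 H2]; split;
    [apply (continuous_ext (fun s => Re (f s))) | apply (continuous_ext (fun s => Im (f s)))];
    intros; rewrite ?E; auto.
Qed.

Lemma ccontinuous_const (c : C) x : ccontinuous (fun _ : U => c) x.
Proof. split; apply continuous_const. Qed.

Lemma ccontinuous_RtoC (g : U -> R) x : continuous g x -> ccontinuous (fun s => RtoC (g s)) x.
Proof. intros H; split; [exact H | apply continuous_const]. Qed.

Lemma ccontinuous_comp {V : UniformSpace} (g : U -> V) (f : V -> C) x :
  continuous g x -> ccontinuous f (g x) -> ccontinuous (fun s => f (g s)) x.
Proof.
  intros Hg [H1 H2]; split;
    [apply (continuous_comp g (fun v => Re (f v))) | apply (continuous_comp g (fun v => Im (f v)))];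
    auto.
Qed.

Lemma ccontinuous_plus (f g : U -> C) x : ccontinuous f x -> ccontinuous g x ->
  ccontinuous (fun s => f s + g s)%C x.
Proof. intros [F1 F2] [G1 G2]; split; apply continuous_Rplus; auto. Qed.

Lemma ccontinuous_opp (f : U -> C) x : ccontinuous f x -> ccontinuous (fun s => - f s)%C x.
Proof. intros [F1 F2]; split; apply continuous_Ropp; auto. Qed.

Lemma ccontinuous_minus (f g : U -> C) x : ccontinuous f x -> ccontinuous g x ->
  ccontinuous (fun s => f s - g s)%C x.
Proof. intros Hf Hg; apply ccontinuous_plus; [exact Hf | now apply ccontinuous_opp]. Qed.

Lemma ccontinuous_mult (f g : U -> C) x : ccontinuous f x -> ccontinuous g x ->
  ccontinuous (fun s => f s * g s)%C x.
Proof.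
  intros [F1 F2] [G1 G2]; split;
    [apply continuous_Rminus | apply continuous_Rplus]; apply continuous_Rmult; auto.
Qed.

Lemma ccontinuous_inv (f : U -> C) x : ccontinuous f x -> f x <> RtoC 0 ->
  ccontinuous (fun s => / f s)%C x.
Proof.
  intros [F1 F2] Hnz; pose proof (C_neq0_sqr _ Hnz) as Hq.
  assert (Cq : continuous (fun s => / (Re (f s) * Re (f s) + Im (f s) * Im (f s))) x).
  { apply continuous_Rinv; [apply continuous_Rplus; apply continuous_Rmult|]; auto. }
  set (q := fun s => Re (f s) * Re (f s) + Im (f s) * Im (f s)) in Cq.
  split; [apply (continuous_ext (fun s => Re (f s) * / q s))
         |apply (continuous_ext (fun s => - (Im (f s) * / q s)))];
    try (intro s; now rewrite Cinv_components);
    [|apply continuous_Ropp]; apply continuous_Rmult; auto.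
Qed.

Lemma ccontinuous_pow (f : U -> C) x k : ccontinuous f x -> ccontinuous (fun s => f s ^ k)%C x.
Proof.
  intros H; induction k as [|k IH]; [apply ccontinuous_const|].
  apply (ccontinuous_ext (fun s => f s * f s ^ k)%C); [intro; now rewrite Cpow_S|].
  now apply ccontinuous_mult.
Qed.

End ComplexContinuity.

Lemma is_cderive_ccontinuous f t d : is_cderive f t d -> ccontinuous f t.
Proof.
  intros [H1 H2]; split; apply (ex_derive_continuous (K:=R_AbsRing) (V:=R_NormedModule));
    eexists; eauto.
Qed.

Lemma is_CRInt_derive (F dF : R -> C) a b : a <= b ->
  (forall t, a <= t <= b -> is_cderive F t (dF t)) ->
  (forall t, a <= t <= b -> ccontinuous dF t) ->
  is_CRInt dF a b (F b - F a)%C.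
Proof.
  intros Hab Hd Hc.
  assert (I : forall x, Rmin a b <= x <= Rmax a b -> a <= x <= b)
    by (rewrite Rmin_left, Rmax_right by lra; auto).
  apply (@is_RInt_fct_extend_pair R_NormedModule R_NormedModule dF a b
           (Re (F b) - Re (F a)) (Im (F b) - Im (F a)));
    [apply (is_RInt_derive (fun s => Re (F s))) | apply (is_RInt_derive (fun s => Im (F s)))];
    intros x Hx; apply I in Hx; [apply Hd | apply Hc | apply Hd | apply Hc]; auto.
Qed.

Lemma is_CRInt_ext (f g : R -> C) a b v :
  (forall t, Rmin a b < t < Rmax a b -> f t = g t) -> is_CRInt f a b v -> is_CRInt g a b v.
Proof. apply (is_RInt_ext (V:=C_R_NormedModule)). Qed.

Lemma is_CRInt_plus f g a b u v : is_CRInt f a b u -> is_CRInt g a b v ->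
  is_CRInt (fun t => (f t + g t)%C) a b (u + v)%C.
Proof. apply (is_RInt_plus (V:=C_R_NormedModule)). Qed.

Lemma is_CRInt_minus f g a b u v : is_CRInt f a b u -> is_CRInt g a b v ->
  is_CRInt (fun t => (f t - g t)%C) a b (u - v)%C.
Proof. apply (is_RInt_minus (V:=C_R_NormedModule)). Qed.

Lemma is_CRInt_scal (k : C) f a b u : is_CRInt f a b u ->
  is_CRInt (fun t => (k * f t)%C) a b (k * u)%C.
Proof.
  intros H.
  pose proof (is_RInt_fct_extend_fst (U:=R_NormedModule) (V:=R_NormedModule) f a b u H) as H1.
  pose proof (is_RInt_fct_extend_snd (U:=R_NormedModule) (V:=R_NormedModule) f a b u H) as H2.
  apply (@is_RInt_fct_extend_pair R_NormedModule R_NormedModule).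
  - exact (is_RInt_minus (V:=R_NormedModule) _ _ _ _ _ _
             (is_RInt_scal _ _ _ (fst k) _ H1) (is_RInt_scal _ _ _ (snd k) _ H2)).
  - exact (is_RInt_plus (V:=R_NormedModule) _ _ _ _ _ _
             (is_RInt_scal _ _ _ (fst k) _ H2) (is_RInt_scal _ _ _ (snd k) _ H1)).
Qed.

Lemma ex_RInt_continuous_R (g : R -> R) c d :
  (forall t, Rmin c d <= t <= Rmax c d -> continuous g t) -> ex_RInt g c d.
Proof. apply (ex_RInt_continuous (V:=R_CompleteNormedModule)). Qed.

Definition CRInt (f : R -> C) (a b : R) : C :=
  (RInt (fun x => Re (f x)) a b, RInt (fun x => Im (f x)) a b).

Lemma is_CRInt_unique f a b u : is_CRInt f a b u -> CRInt f a b = u.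
Proof.
  intros H; unfold CRInt; apply injective_projections; simpl;
    apply (is_RInt_unique (V:=R_CompleteNormedModule));
    [exact (is_RInt_fct_extend_fst (U:=R_NormedModule) (V:=R_NormedModule) f a b u H)
    |exact (is_RInt_fct_extend_snd (U:=R_NormedModule) (V:=R_NormedModule) f a b u H)].
Qed.

Lemma is_CRInt_CRInt f a b : a <= b -> (forall x, a <= x <= b -> ccontinuous f x) ->
  is_CRInt f a b (CRInt f a b).
Proof.
  intros Hab H; apply (@is_RInt_fct_extend_pair R_NormedModule R_NormedModule);
    apply (RInt_correct (V:=R_CompleteNormedModule)), ex_RInt_continuous_R;
    rewrite Rmin_left, Rmax_right by lra; intros; apply H; auto.
Qed.

Lemma is_CRInt_Csum K (f : nat -> R -> C) a b (v : nat -> C) :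
  (forall k, (k < K)%nat -> is_CRInt (f k) a b (v k)) ->
  is_CRInt (fun x => Csum K (fun k => f k x)) a b (Csum K v).
Proof.
  induction K as [|K IH]; intros H; simpl.
  - pose proof (@is_RInt_const C_R_NormedModule a b (RtoC 0)) as H0.
    match type of H0 with is_RInt _ _ _ ?v => replace v with (RtoC 0) in H0; [exact H0|] end.
    apply injective_projections; simpl; unfold scal; simpl; unfold mult; simpl; ring.
  - apply is_CRInt_plus; [apply IH; intros; apply H; lia | apply H; lia].
Qed.

(** * The principal logarithm *)

Lemma atan_inv_neg v : v < 0 -> atan (/ v) = - (PI / 2) - atan v.
Proof.
  intros H; replace (/ v) with (- / (- v)) by (field; lra).
  rewrite atan_opp, atan_inv, atan_opp by lra; lra.
Qed.

Lemma Carg_Re_pos (z : C) : 0 < Re z -> Carg z = atan (Im z / Re z).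
Proof.
  intros H; unfold Carg; destruct (Rlt_dec 0 (fst z)); [reflexivity | unfold Re in H; lra].
Qed.

Lemma Carg_Im_pos (z : C) : 0 < Im z -> Carg z = PI / 2 - atan (Re z / Im z).
Proof.
  destruct z as [x y]; unfold Re, Im, Carg; simpl; intros H.
  destruct (Rlt_dec 0 x) as [Hx|Hx]; [|destruct (Rlt_dec x 0) as [Hx'|Hx']].
  - replace (y / x) with (/ (x / y)) by (field; lra).
    rewrite atan_inv; [reflexivity | apply Rdiv_lt_0_compat; lra].
  - destruct (Rle_dec 0 y); [|lra].
    replace (y / x) with (/ (x / y)) by (field; lra).
    rewrite atan_inv_neg; [lra | apply Rdiv_neg_pos; lra].
  - replace x with 0 by lra; destruct (Rlt_dec 0 y); [|lra].
    replace (0 / y) with 0 by (field; lra); rewrite atan_0; lra.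
Qed.

Lemma Carg_Im_neg (z : C) : Im z < 0 -> Carg z = - (PI / 2) - atan (Re z / Im z).
Proof.
  destruct z as [x y]; unfold Re, Im, Carg; simpl; intros H.
  destruct (Rlt_dec 0 x) as [Hx|Hx]; [|destruct (Rlt_dec x 0) as [Hx'|Hx']].
  - replace (y / x) with (/ (x / y)) by (field; lra).
    rewrite atan_inv_neg; [reflexivity | apply Rdiv_pos_neg; lra].
  - destruct (Rle_dec 0 y); [lra|].
    replace (y / x) with (/ (x / y)) by (field; lra).
    rewrite atan_inv; [lra | apply Rdiv_neg_neg; lra].
  - replace x with 0 by lra; destruct (Rlt_dec 0 y); [lra|].
    destruct (Rlt_dec y 0); [|lra].
    replace (0 / y) with 0 by (field; lra); rewrite atan_0; lra.
Qed.

Lemma locally_pos_continuous (g : R -> R) t : continuous g t -> 0 < g t ->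
  locally t (fun s => 0 < g s).
Proof.
  intros Hg Hpos; apply Hg; exists (mkposreal _ Hpos); intros v Hv.
  change (Rabs (v - g t) < g t) in Hv; apply Rabs_lt_between in Hv; lra.
Qed.

Lemma is_derive_atan_div (X Y : R -> R) t dX dY :
  is_derive X t dX -> is_derive Y t dY -> X t <> 0 ->
  is_derive (fun s => atan (Y s / X s)) t ((X t * dY - Y t * dX) / (X t ^ 2 + Y t ^ 2)).
Proof.
  intros HX HY Hn; eapply is_derive_eq.
  - apply is_derive_Rcomp; [apply is_derive_div; eauto | apply is_derive_atan].
  - pose proof (pow2_gt_0 _ Hn); pose proof (pow2_ge_0 (Y t)).
    unfold Rsqr; field; repeat split; auto; lra.
Qed.

Lemma is_derive_Carg (X Y : R -> R) t dX dY :
  is_derive X t dX -> is_derive Y t dY -> (0 < X t \/ Y t <> 0) ->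
  is_derive (fun s => Carg (X s, Y s)) t ((X t * dY - Y t * dX) / (X t ^ 2 + Y t ^ 2)).
Proof.
  intros HX HY Hreg.
  pose proof (ex_derive_continuous (K:=R_AbsRing) (V:=R_NormedModule) X t (ex_intro _ _ HX)) as CX.
  pose proof (ex_derive_continuous (K:=R_AbsRing) (V:=R_NormedModule) Y t (ex_intro _ _ HY)) as CY.
  destruct (Rlt_dec 0 (X t)) as [Hx|Hx].
  { apply (is_derive_ext_loc (fun s => atan (Y s / X s))).
    + apply (filter_imp (fun s => 0 < X s)); [|now apply locally_pos_continuous].
      intros s Hs; symmetry; now apply Carg_Re_pos.
    + apply is_derive_atan_div; auto; lra. }
  assert (HY0 : Y t <> 0) by (destruct Hreg; lra).
  assert (Swap : is_derive (fun s => atan (X s / Y s)) t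
                   (- ((X t * dY - Y t * dX) / (X t ^ 2 + Y t ^ 2)))).
  { eapply is_derive_eq; [exact (is_derive_atan_div Y X t dY dX HY HX HY0)|].
    pose proof (pow2_gt_0 _ HY0); pose proof (pow2_ge_0 (X t)); field; lra. }
  destruct (Rlt_dec 0 (Y t)) as [Hy|Hy].
  - apply (is_derive_ext_loc (fun s => PI / 2 - atan (X s / Y s))).
    + apply (filter_imp (fun s => 0 < Y s)); [|now apply locally_pos_continuous].
      intros s Hs; symmetry; now apply Carg_Im_pos.
    + eapply is_derive_eq; [apply is_derive_Rminus; [apply is_derive_Rconst | exact Swap]|]; ring.
  - assert (Hy' : 0 < - Y t) by lra.
    apply (is_derive_ext_loc (fun s => - (PI / 2) - atan (X s / Y s))).
    + apply (filter_imp (fun s => 0 < - Y s)); [|apply locally_pos_continuous; auto].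
      2: now apply continuous_Ropp.
      intros s Hs; symmetry; apply Carg_Im_neg; simpl; lra.
    + eapply is_derive_eq; [apply is_derive_Rminus; [apply is_derive_Rconst | exact Swap]|]; ring.
Qed.

Lemma is_derive_ln_Cmod (X Y : R -> R) t dX dY :
  is_derive X t dX -> is_derive Y t dY -> 0 < X t ^ 2 + Y t ^ 2 ->
  is_derive (fun s => ln (Cmod (X s, Y s))) t ((X t * dX + Y t * dY) / (X t ^ 2 + Y t ^ 2)).
Proof.
  intros HX HY Hq; unfold Cmod; cbn [fst snd].
  assert (Dq : is_derive (fun s => X s ^ 2 + Y s ^ 2) t (2 * X t * dX + 2 * Y t * dY)).
  { eapply is_derive_eq; [apply is_derive_Rplus; apply is_derive_pow; eauto|]; simpl; ring. }
  eapply is_derive_eq.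
  - apply is_derive_Rcomp; [apply is_derive_sqrt; [exact Dq | exact Hq] | ].
    apply is_derive_ln, sqrt_lt_R0, Hq.
  - pose proof (sqrt_sqrt _ (Rlt_le _ _ Hq)) as Hs; pose proof (sqrt_lt_R0 _ Hq).
    set (r := sqrt (X t ^ 2 + Y t ^ 2)) in *; rewrite <- Hs; field; lra.
Qed.

Lemma is_cderive_Clog u t du : is_cderive u t du -> (0 < Re (u t) \/ Im (u t) <> 0) ->
  is_cderive (fun s => Clog (u s)) t (du / u t)%C.
Proof.
  intros [DX DY] Hreg.
  assert (Hq : 0 < Re (u t) ^ 2 + Im (u t) ^ 2).
  { pose proof (pow2_ge_0 (Re (u t))); pose proof (pow2_ge_0 (Im (u t))).
    destruct Hreg as [Hr|Hr];
      [pose proof (pow2_gt_0 (Re (u t))) | pose proof (pow2_gt_0 (Im (u t)))]; lra. }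
  assert (E : forall s, u s = (Re (u s), Im (u s))) by (intros s; now destruct (u s)).
  split.
  - apply (is_derive_ext (fun s => ln (Cmod (Re (u s), Im (u s))))); [intros s; now rewrite <- E|].
    eapply is_derive_eq;
      [apply (is_derive_ln_Cmod (fun s => Re (u s)) (fun s => Im (u s)));
         [exact DX | exact DY | exact Hq]|].
    revert Hq; unfold Cdiv, Cinv, Re, Im; destruct (u t), du; simpl; intros; field; lra.
  - apply (is_derive_ext (fun s => Carg (Re (u s), Im (u s)))); [intros s; now rewrite <- E|].
    eapply is_derive_eq;
      [apply (is_derive_Carg (fun s => Re (u s)) (fun s => Im (u s)));
         [exact DX | exact DY | exact Hreg]|].
    revert Hq; unfold Cdiv, Cinv, Re, Im; destruct (u t), du; simpl; intros; field; lra.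
Qed.

Lemma Csum_ext n (f g : nat -> C) : (forall i, (i < n)%nat -> f i = g i) -> Csum n f = Csum n g.
Proof.
  induction n as [|n IH]; intros H; simpl; [reflexivity|].
  rewrite IH by (intros; apply H; lia); rewrite H by lia; reflexivity.
Qed.

Lemma Csum_zero n : Csum n (fun _ => 0%C) = 0%C.
Proof. induction n as [|n IH]; simpl; [|rewrite IH]; ring. Qed.

Lemma Csum_scal n (k : C) (f : nat -> C) : Csum n (fun i => k * f i)%C = (k * Csum n f)%C.
Proof. induction n as [|n IH]; simpl; [|rewrite IH]; ring. Qed.

Lemma Csum_plus n (f g : nat -> C) : Csum n (fun i => f i + g i)%C = (Csum n f + Csum n g)%C.
Proof. induction n as [|n IH]; simpl; [|rewrite IH]; ring. Qed.

Lemma Csum_minus n (f g : nat -> C) : Csum n (fun i => f i - g i)%C = (Csum n f - Csum n g)%C.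
Proof. induction n as [|n IH]; simpl; [|rewrite IH]; ring. Qed.

Lemma Csum_shift n (f : nat -> C) : Csum (S n) f = (f O + Csum n (fun k => f (S k)))%C.
Proof.
  induction n as [|n IH]; [simpl; ring|].
  change (Csum (S (S n)) f) with (Csum (S n) f + f (S n))%C; rewrite IH; simpl; ring.
Qed.

Lemma Csum_comm n K (f : nat -> nat -> C) :
  Csum n (fun i => Csum K (fun k => f i k)) = Csum K (fun k => Csum n (fun i => f i k)).
Proof.
  induction n as [|n IH]; simpl.
  - now rewrite Csum_zero.
  - now rewrite IH, <- Csum_plus.
Qed.

Lemma Csum_single n (f : nat -> C) j : (j < n)%nat ->
  (forall i, (i < n)%nat -> i <> j -> f i = 0%C) -> Csum n f = f j.
Proof.
  induction n as [|n IH]; intros Hj H; [lia|]; simpl.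
  destruct (Nat.eq_dec j n) as [->|Hjn].
  - rewrite (Csum_ext n f (fun _ => 0%C)) by (intros; apply H; lia).
    rewrite Csum_zero; ring.
  - rewrite IH by (lia || (intros; apply H; lia)); rewrite (H n) by lia; ring.
Qed.

(** * Integrals over circles *)

Definition circle (a : C) (r t : R) : C := (a + r * Ceit t)%C.
Definition circle' (r t : R) : C := (r * Ci * Ceit t)%C.
Definition two_pi_i : C := (RtoC (2 * PI) * Ci)%C.

Definition is_circle_integral (F : C -> C) (a : C) (r : R) (v : C) :=
  is_CRInt (fun t => (F (circle a r t) * circle' r t)%C) 0 (2 * PI) v.

Lemma is_residue_circle_integral F a c :
  is_residue F a c <->
  exists eps, 0 < eps /\ forall r, 0 < r < eps -> is_circle_integral F a r (two_pi_i * c)%C.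
Proof. reflexivity. Qed.

Lemma Cmod_Ceit t : Cmod (Ceit t) = 1.
Proof.
  unfold Cmod, Ceit; cbn [fst snd]; rewrite <- sqrt_1; f_equal.
  pose proof (sin2_cos2 t); unfold Rsqr in *; nra.
Qed.

Lemma is_cderive_Ceit t : is_cderive Ceit t (Ci * Ceit t)%C.
Proof.
  split; unfold Ceit, Re, Im; simpl.
  - eapply is_derive_eq; [apply is_derive_cos | ring].
  - eapply is_derive_eq; [apply is_derive_sin | ring].
Qed.

Lemma is_cderive_circle a r t : is_cderive (circle a r) t (circle' r t).
Proof.
  eapply is_cderive_eq;
    [apply is_cderive_plus; [apply is_cderive_const | apply is_cderive_scal, is_cderive_Ceit]|].
  unfold circle'; ring.
Qed.

Lemma ccontinuous_circle a r t : ccontinuous (circle a r) t.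
Proof. exact (is_cderive_ccontinuous _ _ _ (is_cderive_circle a r t)). Qed.

Lemma ccontinuous_circle' r t : ccontinuous (circle' r) t.
Proof.
  apply ccontinuous_mult; [apply ccontinuous_const|].
  exact (is_cderive_ccontinuous _ _ _ (is_cderive_Ceit t)).
Qed.

Lemma circle_minus_centre a r t : (circle a r t - a)%C = (r * Ceit t)%C.
Proof. unfold circle; ring. Qed.

Lemma is_circle_integral_ext F G a r v :
  (forall t, F (circle a r t) = G (circle a r t)) ->
  is_circle_integral F a r v -> is_circle_integral G a r v.
Proof. intros E; apply is_CRInt_ext; intros t _; now rewrite E. Qed.

Lemma is_circle_integral_scal k F a r v : is_circle_integral F a r v ->
  is_circle_integral (fun z => k * F z)%C a r (k * v)%C.
Proof.
  intros H; apply (is_CRInt_ext (fun t => k * (F (circle a r t) * circle' r t)))%C;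
    [intros; ring | now apply is_CRInt_scal].
Qed.

Lemma is_circle_integral_minus F G a r u v :
  is_circle_integral F a r u -> is_circle_integral G a r v ->
  is_circle_integral (fun z => F z - G z)%C a r (u - v)%C.
Proof.
  intros HF HG.
  apply (is_CRInt_ext (fun t => F (circle a r t) * circle' r t - G (circle a r t) * circle' r t))%C;
    [intros; ring | now apply is_CRInt_minus].
Qed.

Lemma is_circle_integral_plus F G a r u v :
  is_circle_integral F a r u -> is_circle_integral G a r v ->
  is_circle_integral (fun z => F z + G z)%C a r (u + v)%C.
Proof.
  intros HF HG.
  apply (is_CRInt_ext (fun t => F (circle a r t) * circle' r t + G (circle a r t) * circle' r t))%C;
    [intros; ring | now apply is_CRInt_plus].
Qed.

Lemma is_circle_integral_Csum K (F : nat -> C -> C) a r (v : nat -> C) :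
  (forall k, (k < K)%nat -> is_circle_integral (F k) a r (v k)) ->
  is_circle_integral (fun z => Csum K (fun k => F k z)) a r (Csum K v).
Proof.
  intros H; apply (is_CRInt_ext (fun t => Csum K (fun k => F k (circle a r t) * circle' r t)))%C;
    [|now apply is_CRInt_Csum].
  intros t _; rewrite Cmult_comm, <- Csum_scal; apply Csum_ext; intros; ring.
Qed.

Lemma is_circle_integral_derive (F P : C -> C) a r :
  (forall t, 0 <= t <= 2 * PI ->
     is_cderive (fun s => P (circle a r s)) t (F (circle a r t) * circle' r t)%C) ->
  (forall t, 0 <= t <= 2 * PI -> ccontinuous (fun s => (F (circle a r s) * circle' r s)%C) t) ->
  is_circle_integral F a r 0.
Proof.
  intros Hd Hc.
  assert (Hclosed : circle a r (2 * PI) = circle a r 0).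
  { unfold circle, Ceit; now rewrite cos_2PI, sin_2PI, cos_0, sin_0. }
  replace (RtoC 0) with (P (circle a r (2 * PI)) - P (circle a r 0))%C
    by (rewrite Hclosed; ring).
  apply (is_CRInt_derive (fun s => P (circle a r s))); auto.
  pose proof PI_RGT_0; lra.
Qed.

Definition centre_or_outside (a : C) (r : R) (b : C) :=
  (b = a /\ 0 < r) \/ (0 <= r /\ r < Cmod (b - a)).

Lemma circle_minus_neq0 a r b t : centre_or_outside a r b -> (circle a r t - b)%C <> 0.
Proof.
  intros [[-> Hr]|[Hr Hb]] E.
  - rewrite circle_minus_centre in E; apply (f_equal Cmod) in E.
    rewrite Cmod_mult, Cmod_Ceit, Cmod_R, Cmod_0, Rabs_pos_eq in E; lra.
  - apply Ceq_minus in E.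
    assert (Hba : (b - a)%C = (r * Ceit t)%C) by (rewrite <- E; apply circle_minus_centre).
    apply (f_equal Cmod) in Hba; rewrite Cmod_mult, Cmod_Ceit, Cmod_R, Rabs_pos_eq in Hba; lra.
Qed.

Lemma is_cderive_circle_minus a r b t : is_cderive (fun s => (circle a r s - b)%C) t (circle' r t).
Proof.
  eapply is_cderive_eq;
    [apply is_cderive_minus; [apply is_cderive_circle | apply is_cderive_const] | ring].
Qed.

Lemma ccontinuous_circle_inv_pow a r b k t : centre_or_outside a r b ->
  ccontinuous (fun s => (/ (circle a r s - b) ^ k * circle' r s)%C) t.
Proof.
  intros Hb; apply ccontinuous_mult; [|apply ccontinuous_circle'].
  apply ccontinuous_inv; [|apply Cpow_nz, circle_minus_neq0, Hb].
  apply ccontinuous_pow, ccontinuous_minus; [apply ccontinuous_circle | apply ccontinuous_const].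
Qed.

Lemma RtoC_INR_S_neq0 j : RtoC (INR (S j)) <> 0%C.
Proof. intro E; apply RtoC_inj in E; revert E; apply not_0_INR; lia. Qed.

Lemma is_circle_integral_inv_pow_SS a r b j : centre_or_outside a r b ->
  is_circle_integral (fun z => / (z - b) ^ S (S j))%C a r 0.
Proof.
  intros Hb; apply (is_circle_integral_derive _ (fun z => - / INR (S j) * / (z - b) ^ S j)%C);
    [|intros; now apply ccontinuous_circle_inv_pow].
  intros t _.
  pose proof (circle_minus_neq0 a r b t Hb) as Hu.
  eapply is_cderive_eq.
  - apply is_cderive_scal, is_cderive_inv, Cpow_nz, Hu.
    apply is_cderive_pow, is_cderive_circle_minus.
  - pose proof (Cpow_nz _ j Hu); pose proof (RtoC_INR_S_neq0 j).
    simpl pred; rewrite !Cpow_S; field; auto.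
Qed.

Lemma is_circle_integral_inv_outside a r b : 0 <= r -> r < Cmod (b - a) ->
  is_circle_integral (fun z => / (z - b) ^ 1)%C a r 0.
Proof.
  intros Hr Hb.
  assert (Hab : (a - b)%C <> 0)
    by (intro E; rewrite <- Copp_minus_distr, E, Cmod_opp, Cmod_0 in Hb; lra).
  assert (Hout : centre_or_outside a r b) by (right; auto).
  (* On the circle [(z - b) / (a - b)] stays within distance [1] of [1], so the principal
     logarithm provides a primitive. *)
  apply (is_circle_integral_derive _ (fun z => Clog ((z - b) * / (a - b)))%C);
    [|intros; now apply ccontinuous_circle_inv_pow].
  intros t _.
  pose proof (circle_minus_neq0 a r b t Hout) as Hu.
  set (q := (r * Ceit t * / (a - b))%C).
  assert (Hq : Cmod q < 1).
  { unfold q; rewrite !Cmod_mult, Cmod_Ceit, Cmod_R, Cmod_inv, Rabs_pos_eq by auto.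
    rewrite <- Copp_minus_distr, Cmod_opp.
    apply (Rmult_lt_reg_r (Cmod (b - a))); [lra|]; field_simplify; lra. }
  assert (Hre : 0 < Re ((circle a r t - b) * / (a - b))%C).
  { replace ((circle a r t - b) * / (a - b))%C with (1 + q)%C by (unfold q, circle; field; auto).
    change (0 < 1 + Re q); pose proof (re_le_Cmod q); pose proof (Rle_abs (- Re q)).
    rewrite Rabs_Ropp in *; lra. }
  eapply is_cderive_eq.
  - apply is_cderive_Clog; [|now left].
    apply is_cderive_mult; [apply is_cderive_circle_minus | apply is_cderive_const].
  - cbv beta; simpl Cpow; field; auto.
Qed.

Lemma is_circle_integral_inv_centre a r : 0 < r ->
  is_circle_integral (fun z => / (z - a) ^ 1)%C a r two_pi_i.
Proof.
  intros Hr; unfold is_circle_integral.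
  apply (is_CRInt_ext (fun _ => Ci)).
  - intros t _; rewrite circle_minus_centre; unfold circle'.
    assert (Ceit t <> 0%C) by (intro E; pose proof (Cmod_Ceit t); rewrite E, Cmod_0 in *; lra).
    assert (RtoC r <> 0%C) by (intro E; apply RtoC_inj in E; lra).
    simpl Cpow; field; auto.
  - pose proof (@is_RInt_const C_R_NormedModule 0 (2 * PI) Ci) as H.
    replace two_pi_i with (scal (2 * PI - 0) Ci); [exact H|].
    unfold two_pi_i; apply injective_projections; simpl; unfold scal; simpl; unfold mult; simpl.
    all: ring.
Qed.

Lemma two_pi_i_neq0 : two_pi_i <> 0%C.
Proof.
  intro E; apply (f_equal Im) in E; unfold two_pi_i, Im in E; simpl in E.
  pose proof PI_RGT_0; lra.
Qed.

Lemma is_residue_unique F a c c' rho : 0 < rho -> is_residue F a c ->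
  (forall r, 0 < r < rho -> is_circle_integral F a r (two_pi_i * c')%C) -> c = c'.
Proof.
  intros Hrho Hres Hc'.
  apply is_residue_circle_integral in Hres; destruct Hres as [eps [Heps Hc]].
  set (r := Rmin eps rho / 2).
  assert (0 < r < eps /\ 0 < r < rho) as [Hr1 Hr2]
    by (unfold r; pose proof (Rmin_l eps rho); pose proof (Rmin_r eps rho);
        pose proof (Rmin_pos eps rho Heps Hrho); lra).
  pose proof (is_CRInt_unique _ _ _ _ (Hc r Hr1)) as E1.
  pose proof (is_CRInt_unique _ _ _ _ (Hc' r Hr2)) as E.
  assert (Ec : (two_pi_i * c)%C = (two_pi_i * c')%C).
  { transitivity (CRInt (fun t => F (circle a r t) * circle' r t)%C 0 (2 * PI));
      [symmetry; exact E1 | exact E]. }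
  pose proof two_pi_i_neq0.
  replace c with (/ two_pi_i * (two_pi_i * c))%C by (field; auto).
  rewrite Ec; field; auto.
Qed.

(** * Reciprocals of polynomials given by their roots *)

Fixpoint poly_of_roots (L : list C) (z : C) : C :=
  match L with nil => 1%C | b :: L' => ((z - b) * poly_of_roots L' z)%C end.

Lemma poly_of_roots_app L1 L2 z :
  poly_of_roots (L1 ++ L2) z = (poly_of_roots L1 z * poly_of_roots L2 z)%C.
Proof. induction L1 as [|b L IH]; simpl; [|rewrite IH]; ring. Qed.

Lemma poly_of_roots_repeat b k z : poly_of_roots (repeat b k) z = ((z - b) ^ k)%C.
Proof. induction k as [|k IH]; simpl; [|rewrite IH]; reflexivity. Qed.

Lemma poly_of_roots_middle l1 c l2 z :
  poly_of_roots (l1 ++ c :: l2) z = ((z - c) * poly_of_roots (l1 ++ l2) z)%C.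
Proof. rewrite !poly_of_roots_app; simpl; ring. Qed.

Lemma Cmult_neq0 (x y : C) : x <> 0%C -> y <> 0%C -> (x * y)%C <> 0%C.
Proof.
  intros Hx Hy E; apply Hy.
  replace y with (/ x * (x * y))%C by (field; auto); rewrite E; ring.
Qed.

Lemma poly_of_roots_neq0 L z : (forall b, In b L -> (z - b)%C <> 0%C) -> poly_of_roots L z <> 0%C.
Proof.
  induction L as [|b L IH]; simpl; intros H.
  - intro E; apply RtoC_inj in E; lra.
  - apply Cmult_neq0; auto.
Qed.

Lemma partial_fraction_step (b c Q z : C) : b <> c -> (z - b)%C <> 0%C -> (z - c)%C <> 0%C ->
  Q <> 0%C ->
  (/ ((z - b) * ((z - c) * Q)))%C = (/ (b - c) * (/ ((z - b) * Q) - / ((z - c) * Q)))%C.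
Proof. intros Hbc Hb Hc HQ; apply Cminus_eq_contra in Hbc; field; auto. Qed.

Lemma repeat_of_const (b : C) L : (forall c, In c L -> c = b) -> b :: L = repeat b (S (length L)).
Proof.
  induction L as [|c L IH]; intros H; [reflexivity|].
  simpl; rewrite (H c (or_introl eq_refl)); f_equal; apply IH; intros; apply H; now right.
Qed.

Section ResidueSum.

Variables (n : nat) (w : nat -> C).
Hypothesis w_inj : forall i j, (i < n)%nat -> (j < n)%nat -> i <> j -> w i <> w j.

Definition roots_among (L : list C) := forall b, In b L -> exists j, (j < n)%nat /\ b = w j.

Definition inv_poly_residues (L : list C) (v : nat -> C) :=
  Csum n v = (if (length L =? 1)%nat then 1%C else 0%C) /\
  forall i r, (i < n)%nat -> (forall b, In b L -> centre_or_outside (w i) r b) ->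
    is_circle_integral (fun z => / poly_of_roots L z)%C (w i) r (two_pi_i * v i)%C.

Lemma inv_poly_residues_linear j : (j < n)%nat ->
  inv_poly_residues (w j :: nil) (fun i => if Ceq_dec (w i) (w j) then 1%C else 0%C).
Proof.
  intros Hj; split.
  - rewrite (Csum_single _ _ j Hj); [destruct (Ceq_dec (w j) (w j)); [reflexivity|easy]|].
    intros i Hi Hij; destruct (Ceq_dec (w i) (w j)) as [E|]; [|reflexivity].
    now destruct (w_inj i j Hi Hj Hij).
  - intros i r Hi Hr; specialize (Hr (w j) (or_introl eq_refl)).
    change (is_circle_integral (fun z => / (z - w j) ^ 1)%C (w i) r
              (two_pi_i * (if Ceq_dec (w i) (w j) then 1 else 0))%C).
    destruct (Ceq_dec (w i) (w j)) as [E|E].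
    + rewrite E in *; replace (two_pi_i * 1)%C with two_pi_i by ring.
      apply is_circle_integral_inv_centre.
      destruct Hr as [[_ Hr]|[Hr0 Hr]]; [exact Hr|].
      replace (w j - w j)%C with (RtoC 0) in Hr by ring; rewrite Cmod_0 in Hr; lra.
    + replace (two_pi_i * 0)%C with (RtoC 0) by ring.
      destruct Hr as [[Hr _]|[Hr0 Hr]]; [now destruct E|].
      now apply is_circle_integral_inv_outside.
Qed.

Lemma inv_poly_residues_repeat b k : (1 <= k)%nat -> roots_among (b :: nil) ->
  exists v, inv_poly_residues (repeat b k) v.
Proof.
  intros Hk Hb; destruct (Hb b (or_introl eq_refl)) as [j [Hj ->]].
  destruct k as [|[|k]]; [lia | eexists; now apply inv_poly_residues_linear|].
  exists (fun _ => 0%C); split; [apply Csum_zero|].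
  intros i r Hi Hr; replace (two_pi_i * 0)%C with (RtoC 0) by ring.
  apply (is_circle_integral_ext (fun z => / (z - w j) ^ S (S k))%C);
    [intros; now rewrite poly_of_roots_repeat|].
  apply is_circle_integral_inv_pow_SS, Hr; now left.
Qed.

(* The partial fraction [1/((z-b)(z-c)) = (1/(z-b) - 1/(z-c)) / (b-c)] lowers the number of
   roots by one. *)
Lemma inv_poly_residues_split b c l1 l2 v1 v2 : b <> c ->
  inv_poly_residues (b :: l1 ++ l2) v1 -> inv_poly_residues (c :: l1 ++ l2) v2 ->
  inv_poly_residues (b :: l1 ++ c :: l2) (fun i => / (b - c) * (v1 i - v2 i))%C.
Proof.
  intros Hbc [S1 I1] [S2 I2]; split.
  - rewrite Csum_scal, Csum_minus, S1, S2.
    replace (length (b :: l1 ++ c :: l2) =? 1)%nat with false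
      by (symmetry; apply Nat.eqb_neq; simpl; rewrite length_app; simpl; lia).
    replace (length (c :: l1 ++ l2)) with (length (b :: l1 ++ l2)) by reflexivity; ring.
  - intros i r Hi Hr.
    assert (Hc : centre_or_outside (w i) r c)
      by (apply Hr; right; apply in_or_app; simpl; tauto).
    assert (Hl : forall x, In x (l1 ++ l2) -> centre_or_outside (w i) r x)
      by (intros x Hx; apply Hr; right; apply in_or_app; apply in_app_or in Hx; simpl; tauto).
    replace (two_pi_i * (/ (b - c) * (v1 i - v2 i)))%C
      with (/ (b - c) * (two_pi_i * v1 i - two_pi_i * v2 i))%C by ring.
    eapply is_circle_integral_ext;
      [|apply is_circle_integral_scal, is_circle_integral_minus;
        [apply I1 | apply I2]; auto; intros x [<-|Hx]; auto; apply Hr; now left].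
    intros t; cbv beta; simpl poly_of_roots; rewrite poly_of_roots_middle; symmetry.
    apply partial_fraction_step; [exact Hbc | apply circle_minus_neq0, Hr; now left
      | now apply circle_minus_neq0
      | apply poly_of_roots_neq0; intros x Hx; now apply circle_minus_neq0, Hl].
Qed.

Lemma inv_poly_residues_exist L : L <> nil -> roots_among L -> exists v, inv_poly_residues L v.
Proof.
  remember (length L) as k eqn:Hk; revert L Hk.
  induction k as [|k IH]; intros L Hk HL Hroots; [destruct L; [easy | discriminate]|].
  destruct L as [|b L']; [easy|].
  destruct (Exists_dec (fun c => c <> b) L') as [Hex|Hall].
  { intros c; destruct (Ceq_dec c b); [right|left]; auto. }
  - apply Exists_exists in Hex; destruct Hex as [c [Hc Hcb]].
    destruct (in_split c L' Hc) as [l1 [l2 ->]].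
    assert (Hsub : forall x, In x (l1 ++ l2) -> In x (b :: l1 ++ c :: l2))
      by (intros x Hx; right; apply in_or_app; apply in_app_or in Hx; simpl; tauto).
    simpl in Hk; rewrite length_app in Hk; simpl in Hk.
    destruct (IH (b :: l1 ++ l2)) as [v1 H1]; [simpl; rewrite length_app; lia | easy | |].
    { intros x [<-|Hx]; apply Hroots; [now left | now apply Hsub]. }
    destruct (IH (c :: l1 ++ l2)) as [v2 H2]; [simpl; rewrite length_app; lia | easy | |].
    { intros x [<-|Hx]; apply Hroots; [right; apply in_or_app; simpl; tauto | now apply Hsub]. }
    eexists; exact (inv_poly_residues_split _ _ _ _ v1 v2 (not_eq_sym Hcb) H1 H2).
  - rewrite (repeat_of_const b L').
    + apply inv_poly_residues_repeat; [lia|].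
      intros x [<-|[]]; apply Hroots; now left.
    + intros c Hc; destruct (Ceq_dec c b) as [|Hcb]; [easy|].
      destruct Hall; apply Exists_exists; eauto.
Qed.

End ResidueSum.

(** * Iterated integrals of continuous functions *)

Lemma continuous_eps_delta (g : R -> R) x :
  (forall eps : posreal, exists del : posreal,
     forall y, Rabs (y - x) < del -> Rabs (g y - g x) < eps) ->
  continuous g x.
Proof.
  intros H; apply filterlim_locally; intro eps; destruct (H eps) as [d Hd].
  exists d; intros y Hy; apply Hd, Hy.
Qed.

Lemma interval_ball p q x : p < x < q ->
  exists e : posreal, forall y, Rabs (y - x) < e -> p < y < q.
Proof.
  intros Hx; assert (He : 0 < Rmin (x - p) (q - x)) by (apply Rmin_glb_lt; lra).
  exists (mkposreal _ He); intros y Hy; simpl in Hy; apply Rabs_lt_between in Hy.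
  pose proof (Rmin_l (x - p) (q - x)); pose proof (Rmin_r (x - p) (q - x)); lra.
Qed.

Lemma locally_interval p q x : p < x < q -> locally x (fun y => p < y < q).
Proof. intros Hx; destruct (interval_ball p q x Hx) as [e He]; exists e; exact He. Qed.

Lemma continuity_2d_pt_continuous_l f x t : continuity_2d_pt f x t -> continuous (fun u => f u t) x.
Proof.
  intros H; apply continuous_eps_delta; intro eps; destruct (H eps) as [d Hd].
  exists d; intros y Hy; apply Hd; [exact Hy | rewrite Rminus_diag, Rabs_R0; apply cond_pos].
Qed.

Lemma continuity_2d_pt_continuous_r f x t : continuity_2d_pt f x t -> continuous (fun s => f x s) t.
Proof.
  intros H; apply continuous_eps_delta; intro eps; destruct (H eps) as [d Hd].
  exists d; intros y Hy; apply Hd; [rewrite Rminus_diag, Rabs_R0; apply cond_pos | exact Hy].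
Qed.

Lemma continuity_2d_pt_swap f x y :
  continuity_2d_pt f x y -> continuity_2d_pt (fun u v => f v u) y x.
Proof. intros H eps; destruct (H eps) as [d Hd]; exists d; intros u v Hu Hv; now apply Hd. Qed.

Lemma continuity_2d_pt_ext_loc (f g : R -> R -> R) x y (dx dy : posreal) :
  (forall u v, Rabs (u - x) < dx -> Rabs (v - y) < dy -> f u v = g u v) ->
  continuity_2d_pt f x y -> continuity_2d_pt g x y.
Proof.
  intros E H eps; destruct (H eps) as [d Hd].
  assert (Hm : 0 < Rmin d (Rmin dx dy)) by (repeat apply Rmin_pos; apply cond_pos).
  exists (mkposreal _ Hm); simpl; intros u v Hu Hv.
  pose proof (Rmin_l d (Rmin dx dy)); pose proof (Rmin_r d (Rmin dx dy)).
  pose proof (Rmin_l dx dy); pose proof (Rmin_r dx dy).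
  pose proof (cond_pos dx); pose proof (cond_pos dy).
  rewrite <- !E by (lra || rewrite Rminus_diag, Rabs_R0; lra).
  apply Hd; lra.
Qed.

Lemma RInt_zero c d : RInt (fun _ : R => 0) c d = 0.
Proof.
  rewrite (RInt_const (V:=R_CompleteNormedModule)); unfold scal; simpl; unfold mult; simpl; ring.
Qed.

(* Uniformity in [t] comes from the compactness of [c, d]. *)
Lemma continuous_RInt_param_le (f : R -> R -> R) y0 c d eta : c <= d -> 0 < eta ->
  (forall y t, Rabs (y - y0) < eta -> c <= t <= d -> continuity_2d_pt f y t) ->
  continuous (fun y => RInt (fun t => f y t) c d) y0.
Proof.
  intros Hcd Heta Hc.
  assert (Hex : forall y, Rabs (y - y0) < eta -> ex_RInt (fun t => f y t) c d).
  { intros y Hy; apply ex_RInt_continuous_R; rewrite Rmin_left, Rmax_right by lra.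
    intros t Ht; apply continuity_2d_pt_continuous_r, Hc; auto. }
  assert (Hy0 : Rabs (y0 - y0) < eta) by (rewrite Rminus_diag, Rabs_R0; lra).
  apply continuous_eps_delta; intro eps.
  set (e' := eps / (2 * (d - c + 1))).
  assert (He' : 0 < e') by (unfold e'; apply Rdiv_lt_0_compat; [apply cond_pos|lra]).
  assert (Hdel : forall t, exists del : posreal, c <= t <= d ->
     forall u v, Rabs (u - y0) < del -> Rabs (v - t) < del -> Rabs (f u v - f y0 t) < e').
  { intros t; destruct (Rle_dec c t) as [H1|H1]; [destruct (Rle_dec t d) as [H2|H2]|];
      [|exists (mkposreal 1 Rlt_0_1); intros; lra ..].
    destruct (Hc y0 t Hy0 (conj H1 H2) (mkposreal _ He')) as [del Hd].
    exists del; intros _ u v Hu Hv; apply Hd; auto. }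
  destruct (choice _ Hdel) as [delta Hdelta].
  destruct (compactness_value_1d c d delta) as [D HD].
  assert (Hm : 0 < Rmin D eta) by (apply Rmin_pos; [apply cond_pos|lra]).
  exists (mkposreal _ Hm); simpl; intros y Hy.
  pose proof (Rmin_l D eta); pose proof (Rmin_r D eta).
  assert (Hy' : Rabs (y - y0) < eta) by lra.
  assert (Hb : forall s, c <= s <= d -> Rabs (f y s - f y0 s) <= 2 * e').
  { intros s Hs; destruct (Rle_dec (Rabs (f y s - f y0 s)) (2 * e')) as [Hl|Hl]; auto.
    exfalso; apply (HD s Hs); intros [t [Ht [Hst HDt]]]; apply Hl.
    assert (A1 : Rabs (f y s - f y0 t) < e') by (apply Hdelta; auto; lra).
    assert (A2 : Rabs (f y0 s - f y0 t) < e')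
      by (apply Hdelta; auto; rewrite Rminus_diag, Rabs_R0; apply cond_pos).
    replace (f y s - f y0 s) with ((f y s - f y0 t) - (f y0 s - f y0 t)) by ring.
    eapply Rle_trans; [apply Rabs_triang|]; rewrite Rabs_Ropp; lra. }
  rewrite <- (RInt_minus (V:=R_CompleteNormedModule)) by (apply Hex; auto).
  eapply Rle_lt_trans; [apply (abs_RInt_le_const _ c d (2 * e')); [lra| |exact Hb]|].
  - apply (ex_RInt_minus (V:=R_NormedModule)); apply Hex; auto.
  - unfold e'; pose proof (cond_pos eps).
    apply (Rmult_lt_reg_r (2 * (d - c + 1))); [lra|]; field_simplify; [nra|lra].
Qed.

Lemma continuous_RInt_param (f : R -> R -> R) y0 c d eta : 0 < eta ->
  (forall y t, Rabs (y - y0) < eta -> Rmin c d <= t <= Rmax c d -> continuity_2d_pt f y t) ->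
  continuous (fun y => RInt (fun t => f y t) c d) y0.
Proof.
  intros Heta Hc; destruct (Rle_dec c d) as [H|H].
  - apply (continuous_RInt_param_le f y0 c d eta); auto.
    rewrite Rmin_left, Rmax_right in Hc by lra; auto.
  - apply Rnot_le_lt in H; rewrite Rmin_right, Rmax_left in Hc by lra.
    apply (continuous_ext_loc _ (fun y => - RInt (fun t => f y t) d c)).
    + apply (filter_imp (fun y => Rabs (y - y0) < eta)); [|now exists (mkposreal _ Heta)].
      intros y Hy; symmetry; rewrite <- (opp_RInt_swap (V:=R_CompleteNormedModule)); [reflexivity|].
      apply ex_RInt_continuous_R; rewrite Rmin_left, Rmax_right by lra.
      intros t Ht; apply continuity_2d_pt_continuous_r, Hc; auto.
    + apply continuous_Ropp, (continuous_RInt_param_le f y0 d c eta); auto; lra.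
Qed.

Section Fubini.

Variables (f : R -> R -> R) (a b c d eta : R).
Hypotheses (Hab : a <= b) (Hcd : c <= d) (Heta : 0 < eta).
Hypothesis f_cont : forall x t, a - eta < x < b + eta -> c - eta < t < d + eta ->
  continuity_2d_pt f x t.

Lemma continuous_RInt_inner x : a - eta < x < b + eta ->
  continuous (fun x => RInt (fun t => f x t) c d) x.
Proof.
  intros Hx; destruct (interval_ball _ _ x Hx) as [e He].
  apply (continuous_RInt_param f x c d e (cond_pos e)); intros y t Hy Ht.
  rewrite Rmin_left, Rmax_right in Ht by lra.
  apply f_cont; [now apply He | lra].
Qed.

Lemma between_Rmin_Rmax p q s t : p < s < q -> p < t < q -> p < Rmin s t /\ Rmax s t < q.
Proof. intros; split; [apply Rmin_glb_lt | apply Rmax_lub_lt]; lra. Qed.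

Lemma is_derive_RInt_upper s t : a - eta < s < b + eta -> c - eta < t < d + eta ->
  is_derive (fun u => RInt (fun x => f x t) a u) s (f s t).
Proof.
  intros Hs Ht; apply (is_derive_RInt (fun x => f x t) _ a s).
  - apply (filter_imp (fun u => a - eta < u < b + eta)); [|now apply locally_interval].
    intros u Hu; apply (RInt_correct (V:=R_CompleteNormedModule)), ex_RInt_continuous_R.
    intros x Hx; apply continuity_2d_pt_continuous_l, f_cont; auto.
    destruct (between_Rmin_Rmax (a - eta) (b + eta) a u) as [H1 H2]; lra.
  - apply continuity_2d_pt_continuous_l, f_cont; auto.
Qed.

Lemma ex_RInt_partial s : a - eta < s < b + eta ->
  ex_RInt (fun t => RInt (fun x => f x t) a s) c d.
Proof.
  intros Hs; apply ex_RInt_continuous_R; rewrite Rmin_left, Rmax_right by lra; intros t Ht.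
  destruct (interval_ball (c - eta) (d + eta) t ltac:(lra)) as [e He].
  apply (continuous_RInt_param (fun t x => f x t) t a s e (cond_pos e)); intros y x Hy Hx.
  apply continuity_2d_pt_swap.
  destruct (between_Rmin_Rmax (a - eta) (b + eta) a s) as [H1 H2]; [lra|lra|].
  apply f_cont; [lra | now apply He].
Qed.

Lemma is_derive_RInt_iterated s : a <= s <= b ->
  is_derive (fun s => RInt (fun t => RInt (fun x => f x t) a s) c d) s (RInt (fun t => f s t) c d).
Proof.
  intros Hs.
  replace (RInt (fun t => f s t) c d)
    with (RInt (fun t => Derive (fun u => RInt (fun x => f x t) a u) s) c d).
  2: { apply RInt_ext; intros t Ht; rewrite Rmin_left, Rmax_right in Ht by lra.
       apply is_derive_unique, is_derive_RInt_upper; lra. }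
  apply is_derive_RInt_param.
  - apply (filter_imp (fun u => a - eta < u < b + eta)); [|apply locally_interval; lra].
    intros u Hu t Ht; rewrite Rmin_left, Rmax_right in Ht by lra.
    eexists; apply is_derive_RInt_upper; lra.
  - intros t Ht; rewrite Rmin_left, Rmax_right in Ht by lra.
    destruct (interval_ball (a - eta) (b + eta) s ltac:(lra)) as [es Hes].
    destruct (interval_ball (c - eta) (d + eta) t ltac:(lra)) as [et Het].
    apply (continuity_2d_pt_ext_loc f _ s t es et).
    + intros u v Hu Hv; symmetry; apply is_derive_unique, is_derive_RInt_upper; auto.
    + apply f_cont; lra.
  - apply (filter_imp (fun u => a - eta < u < b + eta)); [|apply locally_interval; lra].
    intros u Hu; now apply ex_RInt_partial.
Qed.

Lemma RInt_Fubini :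
  RInt (fun t => RInt (fun x => f x t) a b) c d = RInt (fun x => RInt (fun t => f x t) c d) a b.
Proof.
  set (Phi := fun s => RInt (fun t => RInt (fun x => f x t) a s) c d).
  set (Psi := fun s => RInt (fun x => RInt (fun t => f x t) c d) a s).
  assert (Phi_a : Phi a = 0).
  { unfold Phi; rewrite (RInt_ext _ (fun _ => 0)); [apply RInt_zero|].
    intros; apply (RInt_point (V:=R_CompleteNormedModule)). }
  assert (Psi_a : Psi a = 0) by apply (RInt_point (V:=R_CompleteNormedModule)).
  change (Phi b = Psi b).
  destruct (Req_dec a b) as [<-|Hne]; [now rewrite Phi_a, Psi_a|].
  enough (E : Phi a - Psi a = Phi b - Psi b) by (rewrite Phi_a, Psi_a in E; lra).
  apply (eq_is_derive (fun s => Phi s - Psi s)); [|lra].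
  intros s Hs; eapply is_derive_eq; [apply is_derive_Rminus|].
  - now apply is_derive_RInt_iterated.
  - apply (is_derive_RInt (fun x => RInt (fun t => f x t) c d) Psi a s);
      [|apply continuous_RInt_inner; lra].
    apply (filter_imp (fun u => a - eta < u < b + eta)); [|apply locally_interval; lra].
    intros u Hu; apply (RInt_correct (V:=R_CompleteNormedModule)), ex_RInt_continuous_R.
    intros x Hx; apply continuous_RInt_inner.
    destruct (between_Rmin_Rmax (a - eta) (b + eta) a u) as [H1 H2]; lra.
  - change (zero : R) with 0; ring.
Qed.

End Fubini.

Lemma is_RInt_iterated_zero (k : R -> R -> R) a b c d eta : a <= b -> c <= d -> 0 < eta ->
  (forall x t, a - eta < x < b + eta -> continuity_2d_pt k x t) ->
  (forall x, a <= x <= b -> is_RInt (k x) c d 0) ->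
  is_RInt (fun t => RInt (fun x => k x t) a b) c d 0.
Proof.
  intros Hab Hcd Heta Hk Hz.
  assert (Hex : ex_RInt (fun t => RInt (fun x => k x t) a b) c d).
  { apply ex_RInt_continuous_R; intros t _.
    apply (continuous_RInt_param (fun t x => k x t) t a b 1); [lra|].
    intros y s _ Hs; rewrite Rmin_left, Rmax_right in Hs by lra.
    apply continuity_2d_pt_swap, Hk; lra. }
  replace 0 with (RInt (fun t => RInt (fun x => k x t) a b) c d).
  - now apply (RInt_correct (V:=R_CompleteNormedModule)).
  - rewrite (RInt_Fubini k a b c d eta) by (auto; intros; apply Hk; lra).
    rewrite (RInt_ext _ (fun _ => 0)); [apply RInt_zero|].
    intros x Hx; rewrite Rmin_left, Rmax_right in Hx by lra.
    apply (is_RInt_unique (V:=R_CompleteNormedModule)), Hz; lra.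
Qed.

Lemma is_CRInt_iterated_zero (K : R -> R -> C) a b c d eta : a <= b -> c <= d -> 0 < eta ->
  (forall x t, a - eta < x < b + eta ->
     ccontinuous (fun p : R * R => K (fst p) (snd p)) (x, t)) ->
  (forall x, a <= x <= b -> is_CRInt (K x) c d (RtoC 0)) ->
  is_CRInt (fun t => CRInt (fun x => K x t) a b) c d (RtoC 0).
Proof.
  intros Hab Hcd Heta Hc Hz.
  apply (@is_RInt_fct_extend_pair R_NormedModule R_NormedModule);
    apply (is_RInt_iterated_zero _ a b c d eta); auto;
    try (intros x t Hx; apply continuity_2d_pt_filterlim, (Hc x t Hx)); intros x Hx.
  - exact (is_RInt_fct_extend_fst (U:=R_NormedModule) (V:=R_NormedModule) _ _ _ _ (Hz x Hx)).
  - exact (is_RInt_fct_extend_snd (U:=R_NormedModule) (V:=R_NormedModule) _ _ _ _ (Hz x Hx)).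
Qed.

(** * The integral representation of [g_m] *)

Definition on_unit_segment (z : C) := Im z = 0 /\ 0 <= Re z <= 1.

Lemma RtoC_minus_neq0 x (z : C) : 0 <= x <= 1 -> ~ on_unit_segment z -> (RtoC x - z)%C <> 0.
Proof.
  intros Hx Hz E; apply Ceq_minus in E; apply Hz; subst z.
  unfold on_unit_segment, Re, Im; simpl; lra.
Qed.

Lemma off_unit_segment_neq0 (z : C) : ~ on_unit_segment z -> z <> 0%C.
Proof. intros H E; apply H; subst; unfold on_unit_segment, Re, Im; simpl; lra. Qed.

Lemma Clog_1 : Clog 1 = 0%C.
Proof.
  unfold Clog, Carg, Cmod; simpl; destruct (Rlt_dec 0 1); [|lra].
  replace (1 * (1 * 1) + 0 * (0 * 1)) with 1 by ring.
  rewrite sqrt_1, ln_1; replace (0 / 1) with 0 by field; now rewrite atan_0.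
Qed.

Lemma is_CRInt_RtoC (g : R -> R) a b (v : R) :
  is_RInt g a b v -> is_CRInt (fun x => RtoC (g x)) a b (RtoC v).
Proof.
  intros H; apply (@is_RInt_fct_extend_pair R_NormedModule R_NormedModule); [exact H|].
  pose proof (@is_RInt_const R_NormedModule a b 0) as H0.
  match type of H0 with is_RInt _ _ _ ?v => replace v with 0 in H0; [exact H0|] end.
  unfold scal; simpl; unfold mult; simpl; ring.
Qed.

Lemma is_CRInt_pow m : is_CRInt (fun x => RtoC x ^ m)%C 0 1 (RtoC (/ INR (S m))).
Proof.
  apply (is_CRInt_ext (fun x => RtoC (x ^ m))); [intros; apply RtoC_pow|].
  apply is_CRInt_RtoC.
  assert (0 < INR (S m)) by (apply lt_0_INR; lia).
  replace (/ INR (S m)) with (/ INR (S m) * 1 ^ S m - / INR (S m) * 0 ^ S m)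
    by (rewrite pow1, pow_i by lia; field; lra).
  apply (is_RInt_derive (fun x => / INR (S m) * x ^ S m)).
  - intros x _; eapply is_derive_eq.
    + apply is_derive_scal, is_derive_pow, is_derive_Rid.
    + simpl pred; cbv beta; field; lra.
  - intros x _; apply (ex_derive_continuous (K:=R_AbsRing) (V:=R_NormedModule)).
    eexists; apply is_derive_pow, is_derive_Rid.
Qed.

(* [1 - x / z] avoids the branch cut of the principal logarithm. *)
Lemma one_minus_div_regular (z : C) x : ~ on_unit_segment z -> 0 <= x <= 1 ->
  0 < Re (1 - x * / z)%C \/ Im (1 - x * / z)%C <> 0.
Proof.
  intros Hz Hx; pose proof (off_unit_segment_neq0 z Hz) as Hz0.
  destruct z as [p q]; unfold on_unit_segment, Re, Im in Hz; simpl in Hz.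
  assert (Hpq : 0 < p * p + q * q).
  { destruct (Req_dec q 0) as [->|Hq]; [|nra].
    assert (p <> 0) by (intros ->; now apply Hz0); nra. }
  assert (ER : Re (1 - x * / (p, q))%C = 1 - x * p / (p * p + q * q))
    by (unfold Re; simpl; field; lra).
  assert (EI : Im (1 - x * / (p, q))%C = x * q / (p * p + q * q))
    by (unfold Im; simpl; field; lra).
  rewrite ER, EI; destruct (Req_dec q 0) as [->|Hq].
  - left; assert (Hp : p < 0 \/ 1 < p) by lra.
    replace (x * p / (p * p + 0 * 0)) with (x / p) by (field; lra).
    destruct Hp as [Hp|Hp].
    + assert (Hip : / p < 0) by (apply Rinv_lt_0_compat; lra).
      assert (x / p <= 0) by (unfold Rdiv; nra).
      lra.
    + assert (x / p < 1) by (apply (Rmult_lt_reg_r p); [lra|]; field_simplify; lra).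
      lra.
  - destruct (Req_dec x 0) as [->|Hx0].
    { left; replace (0 * p / (p * p + q * q)) with 0 by (field; lra); lra. }
    right; intro E.
    assert (Hxq : x * q = 0).
    { apply (Rmult_eq_reg_r (/ (p * p + q * q))); [unfold Rdiv in E; lra|].
      apply Rinv_neq_0_compat; lra. }
    apply Rmult_integral in Hxq; tauto.
Qed.

Lemma is_CRInt_inv_minus (z : C) : ~ on_unit_segment z ->
  is_CRInt (fun x => / (RtoC x - z))%C 0 1 (Clog (1 - / z)).
Proof.
  intros Hz; pose proof (off_unit_segment_neq0 z Hz) as Hz0.
  set (u := fun x : R => (1 - x * / z)%C).
  assert (Hu_neq0 : forall x, 0 <= x <= 1 -> u x <> 0%C).
  { intros x Hx E; unfold u in E; destruct (one_minus_div_regular z x Hz Hx) as [H|H];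
      rewrite E in H; simpl in H; [lra | now apply H]. }
  replace (Clog (1 - / z)) with (Clog (u 1) - Clog (u 0))%C.
  2: { replace (u 0) with (RtoC 1) by (unfold u; cbv beta; ring).
       replace (u 1) with (1 - / z)%C by (unfold u; cbv beta; ring).
       rewrite Clog_1; ring. }
  apply (is_CRInt_derive (fun x => Clog (u x))); [lra| |].
  - intros t Ht; eapply is_cderive_eq.
    + apply is_cderive_Clog; [|now apply one_minus_div_regular].
      apply is_cderive_minus; [apply is_cderive_const|].
      apply is_cderive_mult; [apply is_cderive_RtoC | apply is_cderive_const].
    + pose proof (Hu_neq0 t Ht) as Hut; pose proof (RtoC_minus_neq0 t z Ht Hz) as Htz.
      assert ((z - t)%C <> 0) by (intro E; apply Htz; rewrite <- Copp_minus_distr, E; ring).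
      unfold u in *; field; repeat split; auto.
  - intros t Ht; apply ccontinuous_inv; [|now apply RtoC_minus_neq0].
    apply ccontinuous_minus; [apply ccontinuous_RtoC, continuous_id | apply ccontinuous_const].
Qed.

Lemma g_m_S m (z : C) : z <> 0%C -> g_m (S m) z = (/ INR (S m) + z * g_m m z)%C.
Proof.
  intros Hz0; unfold g_m; cbn [Csum].
  pose proof (Cpow_nz z m Hz0); pose proof (RtoC_INR_S_neq0 m).
  rewrite Cpow_S; field; auto.
Qed.

(* From [x ^ (m + 1) / (x - z) = x ^ m + z * x ^ m / (x - z)], by induction on [m]. *)
Lemma is_CRInt_g_m m (z : C) : ~ on_unit_segment z ->
  is_CRInt (fun x => RtoC x ^ m * / (RtoC x - z))%C 0 1 (g_m m z).
Proof.
  intros Hz; pose proof (off_unit_segment_neq0 z Hz) as Hz0.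
  induction m as [|m IH].
  - replace (g_m 0 z) with (Clog (1 - / z)) by (unfold g_m; simpl; ring).
    apply (is_CRInt_ext (fun x => / (RtoC x - z))%C); [intros; simpl; ring|].
    now apply is_CRInt_inv_minus.
  - rewrite g_m_S, <- RtoC_inv by (auto || (apply not_0_INR; lia)).
    apply (is_CRInt_ext (fun x => RtoC x ^ m + z * (RtoC x ^ m * / (RtoC x - z)))%C).
    + intros t Ht; rewrite Rmin_left, Rmax_right in Ht by lra.
      pose proof (RtoC_minus_neq0 t z ltac:(lra) Hz); rewrite Cpow_S; field; auto.
    + apply is_CRInt_plus; [apply is_CRInt_pow | now apply is_CRInt_scal].
Qed.

(** * Separating the variables in [G_m] *)

Lemma In_firstn {A : Type} n (l : list A) x : In x (firstn n l) -> In x l.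
Proof. intros H; rewrite <- (firstn_skipn n l); apply in_or_app; now left. Qed.

Lemma In_skipn {A : Type} n (l : list A) x : In x (skipn n l) -> In x l.
Proof. intros H; rewrite <- (firstn_skipn n l); apply in_or_app; now right. Qed.

(* Repeatedly moving one root factor from the variable [z] to the variable [x]. *)
Lemma inv_poly_of_roots_telescope L (x z : C) : (x - z)%C <> 0%C ->
  (forall b, In b L -> (x - b)%C <> 0%C /\ (z - b)%C <> 0%C) ->
  (/ ((x - z) * poly_of_roots L z))%C =
  (/ ((x - z) * poly_of_roots L x) +
   Csum (length L) (fun k => / poly_of_roots (firstn (S k) L) x * / poly_of_roots (skipn k L) z))%C.
Proof.
  intros Hxz; induction L as [|b L IH]; intros HL; [simpl; ring|].
  destruct (HL b (or_introl eq_refl)) as [Hxb Hzb].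
  assert (HL' : forall c, In c L -> (x - c)%C <> 0%C /\ (z - c)%C <> 0%C)
    by (intros; apply HL; now right).
  assert (HPx : poly_of_roots L x <> 0%C)
    by (apply poly_of_roots_neq0; intros c Hc; apply (proj1 (HL' c Hc))).
  assert (HPz : poly_of_roots L z <> 0%C)
    by (apply poly_of_roots_neq0; intros c Hc; apply (proj2 (HL' c Hc))).
  simpl length; rewrite Csum_shift.
  rewrite (Csum_ext _ _ (fun k => / (x - b) *
             (/ poly_of_roots (firstn (S k) L) x * / poly_of_roots (skipn k L) z)))%C.
  2: { intros k _; simpl firstn; simpl skipn; simpl poly_of_roots.
       assert (poly_of_roots (firstn (S k) L) x <> 0%C)
         by (apply poly_of_roots_neq0; intros c Hc; apply (proj1 (HL' c (In_firstn _ _ _ Hc)))).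
       assert (poly_of_roots (skipn k L) z <> 0%C)
         by (apply poly_of_roots_neq0; intros c Hc; apply (proj2 (HL' c (In_skipn _ _ _ Hc)))).
       field; auto. }
  rewrite Csum_scal.
  replace (Csum (length L) _) with
    (/ ((x - z) * poly_of_roots L z) - / ((x - z) * poly_of_roots L x))%C
    by (rewrite (IH HL'); ring).
  simpl; field; repeat split; auto.
Qed.

Lemma ccontinuous_poly_of_roots {U : UniformSpace} L (g : U -> C) x :
  ccontinuous g x -> ccontinuous (fun s => poly_of_roots L (g s)) x.
Proof.
  intros H; induction L as [|b L IH]; simpl; [apply ccontinuous_const|].
  apply ccontinuous_mult; auto; apply ccontinuous_minus; auto; apply ccontinuous_const.
Qed.

Lemma ccontinuous_RtoC_id x : ccontinuous (fun s : R => RtoC s) x.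
Proof. apply ccontinuous_RtoC, continuous_id. Qed.

Definition separated_rest m L (x : R) (z : C) : C :=
  (RtoC x ^ m * / ((RtoC x - z) * poly_of_roots L x))%C.

Definition separated_coef m L k : C :=
  CRInt (fun x => RtoC x ^ m * / poly_of_roots (firstn (S k) L) x)%C 0 1.

Lemma ccontinuous_separated_rest {U : UniformSpace} m L (X : U -> R) (Z : U -> C) p :
  continuous X p -> ccontinuous Z p -> (RtoC (X p) - Z p)%C <> 0%C ->
  (forall b, In b L -> (RtoC (X p) - b)%C <> 0%C) ->
  ccontinuous (fun q => separated_rest m L (X q) (Z q)) p.
Proof.
  intros HX HZ HXZ Hb; unfold separated_rest.
  assert (HXc : ccontinuous (fun q => RtoC (X q)) p) by now apply ccontinuous_RtoC.
  apply ccontinuous_mult; [now apply ccontinuous_pow|].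
  apply ccontinuous_inv; [apply ccontinuous_mult|].
  - now apply ccontinuous_minus.
  - now apply ccontinuous_poly_of_roots.
  - apply Cmult_neq0; [exact HXZ | now apply poly_of_roots_neq0].
Qed.

Section Separation.

Variables (m : nat) (L : list C).
Hypothesis roots_off_segment : forall b x, In b L -> 0 <= x <= 1 -> (RtoC x - b)%C <> 0%C.

Lemma is_CRInt_separated_coef k :
  is_CRInt (fun x => RtoC x ^ m * / poly_of_roots (firstn (S k) L) x)%C 0 1 (separated_coef m L k).
Proof.
  apply is_CRInt_CRInt; [lra|]; intros x Hx.
  apply ccontinuous_mult; [apply ccontinuous_pow, ccontinuous_RtoC_id|].
  apply ccontinuous_inv; [apply ccontinuous_poly_of_roots, ccontinuous_RtoC_id|].
  apply poly_of_roots_neq0; intros b Hb; apply roots_off_segment; auto; eapply In_firstn, Hb.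
Qed.

Lemma g_m_div_poly_of_roots z : ~ on_unit_segment z ->
  (forall b, In b L -> (z - b)%C <> 0%C) ->
  (g_m m z * / poly_of_roots L z)%C =
  (CRInt (fun x => separated_rest m L x z) 0 1 +
   Csum (length L) (fun k => separated_coef m L k * / poly_of_roots (skipn k L) z))%C.
Proof.
  intros Hz Hzb.
  assert (Hlhs := is_CRInt_scal (/ poly_of_roots L z) _ _ _ _ (is_CRInt_g_m m z Hz)).
  assert (Hrhs : is_CRInt (fun x => separated_rest m L x z + Csum (length L) (fun k =>
      (/ poly_of_roots (skipn k L) z) * (RtoC x ^ m * / poly_of_roots (firstn (S k) L) x)))%C 0 1
    (CRInt (fun x => separated_rest m L x z) 0 1 +
     Csum (length L) (fun k => separated_coef m L k * / poly_of_roots (skipn k L) z))%C).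
  { apply is_CRInt_plus.
    - apply is_CRInt_CRInt; [lra|]; intros x Hx.
      apply (ccontinuous_separated_rest m L (fun x => x) (fun _ => z));
        [apply continuous_id | apply ccontinuous_const | now apply RtoC_minus_neq0 |].
      intros; now apply roots_off_segment.
    - apply is_CRInt_Csum; intros k _; rewrite Cmult_comm.
      apply is_CRInt_scal, is_CRInt_separated_coef. }
  rewrite Cmult_comm, <- (is_CRInt_unique _ _ _ _ Hlhs); apply is_CRInt_unique.
  eapply is_CRInt_ext; [|exact Hrhs].
  intros x Hx; rewrite Rmin_left, Rmax_right in Hx by lra; unfold separated_rest.
  assert (Hxz := RtoC_minus_neq0 x z ltac:(lra) Hz).
  rewrite (Csum_ext _ _ (fun k => RtoC x ^ m *
    (/ poly_of_roots (firstn (S k) L) x * / poly_of_roots (skipn k L) z)))%C by (intros; ring).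
  rewrite Csum_scal, <- Cmult_plus_distr_l.
  assert (HPz : poly_of_roots L z <> 0%C) by (apply poly_of_roots_neq0; auto).
  rewrite <- inv_poly_of_roots_telescope; auto.
  - field; auto.
  - intros b Hb; split; [apply roots_off_segment; auto; lra | auto].
Qed.

End Separation.

Lemma im_le_Cmod (c : C) : Rabs (Im c) <= Cmod c.
Proof.
  pose proof (Cmod2_alt c); pose proof (Cmod_ge_0 c); pose proof (pow2_ge_0 (Re c)).
  simpl in *; apply Rabs_le; split; nra.
Qed.

Lemma finite_pos_bound n (P : nat -> R -> Prop) :
  (forall i r r', 0 < r' <= r -> P i r -> P i r') ->
  (forall i, (i < n)%nat -> exists r, 0 < r /\ P i r) ->
  exists r, 0 < r /\ forall i, (i < n)%nat -> P i r.
Proof.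
  intros Hmono; induction n as [|n IH]; intros H; [exists 1; split; [lra | intros; lia]|].
  destruct IH as [r [Hr HP]]; [intros; apply H; lia|].
  destruct (H n (Nat.lt_succ_diag_r n)) as [r' [Hr' HP']].
  exists (Rmin r r'); split; [now apply Rmin_pos|].
  intros i Hi; destruct (Nat.eq_dec i n) as [->|Hin].
  - apply (Hmono n r'); auto; split; [now apply Rmin_pos | apply Rmin_r].
  - apply (Hmono i r); [split; [now apply Rmin_pos | apply Rmin_l] | apply HP; lia].
Qed.

Lemma unit_segment_margin z : ~ on_unit_segment z ->
  exists r, 0 < r /\ forall x, - r < x < 1 + r -> r < Cmod (RtoC x - z).
Proof.
  intros Hz.
  assert (Hre : forall x, Rabs (x - Re z) <= Cmod (RtoC x - z))
    by (intros x; replace (x - Re z) with (Re (RtoC x - z)) by (unfold Re; simpl; ring);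
        apply re_le_Cmod).
  destruct (Req_dec (Im z) 0) as [Him|Him].
  - destruct (Rlt_dec (Re z) 0) as [Hneg|Hneg].
    + exists (- Re z / 2); split; [lra|]; intros x Hx.
      pose proof (Hre x); pose proof (Rle_abs (x - Re z)); lra.
    + assert (Hpos : 1 < Re z) by (destruct (Rle_dec (Re z) 1); [destruct Hz; split; lra | lra]).
      exists ((Re z - 1) / 2); split; [lra|]; intros x Hx.
      pose proof (Hre x); pose proof (Rle_abs (- (x - Re z))); rewrite Rabs_Ropp in *; lra.
  - exists (Rabs (Im z) / 2); split; [pose proof (Rabs_pos_lt _ Him); lra|]; intros x _.
    pose proof (im_le_Cmod (RtoC x - z)); pose proof (Rabs_pos_lt _ Him).
    replace (Im (RtoC x - z)) with (- Im z) in * by (unfold Im; simpl; ring).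
    rewrite Rabs_Ropp in *; lra.
Qed.

(* Circles of radius below [rho] around the [w i] separate the [w j], and stay at distance
   [rho] from a neighbourhood of [0, 1]. *)
Definition admissible_radius n (w : nat -> C) (rho : R) :=
  forall i, (i < n)%nat ->
    (forall j, (j < n)%nat -> j <> i -> rho < Cmod (w j - w i)) /\
    (forall x, - rho < x < 1 + rho -> 2 * rho < Cmod (RtoC x - w i)).

Lemma admissible_radius_exists n (w : nat -> C) :
  (forall i j, (i < n)%nat -> (j < n)%nat -> i <> j -> w i <> w j) ->
  (forall i, (i < n)%nat -> ~ on_unit_segment (w i)) ->
  exists rho, 0 < rho /\ admissible_radius n w rho.
Proof.
  intros Hdist Hseg; apply finite_pos_bound.
  { intros i r r' Hr [H1 H2]; split.
    - intros j Hj Hji; specialize (H1 j Hj Hji); lra.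
    - intros x Hx; specialize (H2 x ltac:(lra)); lra. }
  intros i Hi.
  destruct (unit_segment_margin (w i) (Hseg i Hi)) as [r0 [Hr0 Hmargin]].
  destruct (finite_pos_bound n (fun j r => j <> i -> r < Cmod (w j - w i))) as [r1 [Hr1 Hsep]].
  { intros j r r' Hr H Hji; specialize (H Hji); lra. }
  { intros j Hj; destruct (Nat.eq_dec j i) as [->|Hji]; [exists 1; split; [lra | easy]|].
    exists (Cmod (w j - w i) / 2).
    assert (0 < Cmod (w j - w i)) by (apply Cmod_gt_0, Cminus_eq_contra, Hdist; auto).
    split; intros; lra. }
  exists (Rmin (r0 / 2) r1); pose proof (Rmin_l (r0 / 2) r1); pose proof (Rmin_r (r0 / 2) r1).
  split; [apply Rmin_pos; lra|]; split.
  - intros j Hj Hji; specialize (Hsep j Hj Hji); lra.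
  - intros x Hx; specialize (Hmargin x ltac:(lra)); lra.
Qed.

(** * The residues of [G_m] *)

Fixpoint root_list (w : nat -> C) (N : nat -> nat) (n : nat) : list C :=
  match n with O => nil | S k => root_list w N k ++ repeat (w k) (N k) end.

Lemma hpoly_root_list n w N z : hpoly n w N z = poly_of_roots (root_list w N n) z.
Proof.
  unfold hpoly; induction n as [|n IH]; simpl; [reflexivity|].
  now rewrite poly_of_roots_app, poly_of_roots_repeat, IH.
Qed.

Lemma In_root_list w N n b : In b (root_list w N n) -> exists i, (i < n)%nat /\ b = w i.
Proof.
  induction n as [|n IH]; simpl; [easy|]; intros H; apply in_app_or in H; destruct H as [H|H].
  - destruct (IH H) as [i [Hi E]]; exists i; split; [lia | exact E].
  - apply repeat_spec in H; exists n; split; [lia | exact H].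
Qed.

Lemma root_list_neq_nil w N n : (1 <= n)%nat -> (forall i, (i < n)%nat -> (1 <= N i)%nat) ->
  root_list w N n <> nil.
Proof.
  destruct n as [|n]; [lia|]; intros _ HN E; simpl in E; apply app_eq_nil in E.
  specialize (HN n (Nat.lt_succ_diag_r n)); destruct (N n); [lia | easy].
Qed.

Lemma ccontinuous_snd_comp (g : R -> C) (p : R * R) :
  ccontinuous g (snd p) -> ccontinuous (fun q : R * R => g (snd q)) p.
Proof.
  destruct p as [x t]; intros H.
  apply (ccontinuous_comp (fun q : R * R => snd q) g); [apply continuous_snd | exact H].
Qed.

Section Residues.

Variables (n m : nat) (w : nat -> C) (N : nat -> nat) (rho : R).
Hypotheses (w_inj : forall i j, (i < n)%nat -> (j < n)%nat -> i <> j -> w i <> w j)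
  (rho_pos : 0 < rho) (rho_admissible : admissible_radius n w rho).

Let L := root_list w N n.

Lemma roots_off_neighbourhood b x : In b L -> - rho < x < 1 + rho -> (RtoC x - b)%C <> 0%C.
Proof.
  intros Hb Hx E; destruct (In_root_list _ _ _ _ Hb) as [j [Hj ->]].
  pose proof (proj2 (rho_admissible j Hj) x Hx); rewrite E, Cmod_0 in *; lra.
Qed.

Section OnCircle.

Variables (i : nat) (r : R).
Hypotheses (Hi : (i < n)%nat) (Hr : 0 < r < rho).

Lemma roots_centre_or_outside b : In b L -> centre_or_outside (w i) r b.
Proof.
  intros Hb; destruct (In_root_list _ _ _ _ Hb) as [j [Hj ->]].
  destruct (Nat.eq_dec j i) as [->|Hji]; [left; split; [easy | lra]|].
  right; pose proof (proj1 (rho_admissible i Hi) j Hj Hji); lra.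
Qed.

Lemma circle_far_from_segment t x : - rho < x < 1 + rho -> rho < Cmod (RtoC x - circle (w i) r t).
Proof.
  intros Hx; pose proof (proj2 (rho_admissible i Hi) x Hx) as Hfar.
  pose proof (Cmod_triangle (RtoC x - circle (w i) r t) (circle (w i) r t - w i)) as Htri.
  replace (RtoC x - circle (w i) r t + (circle (w i) r t - w i))%C with (RtoC x - w i)%C
    in Htri by ring.
  rewrite circle_minus_centre, Cmod_mult, Cmod_Ceit, Cmod_R, Rabs_pos_eq in Htri by lra.
  lra.
Qed.

Lemma circle_minus_RtoC_neq0 t x : - rho < x < 1 + rho -> (RtoC x - circle (w i) r t)%C <> 0%C.
Proof. intros Hx E; pose proof (circle_far_from_segment t x Hx); rewrite E, Cmod_0 in *; lra. Qed.

Lemma circle_off_unit_segment t : ~ on_unit_segment (circle (w i) r t).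
Proof.
  intros [Him Hre]; apply (circle_minus_RtoC_neq0 t (Re (circle (w i) r t))); [lra|].
  apply injective_projections; unfold Re, Im in *; simpl in *; lra.
Qed.

Lemma is_circle_integral_separated_rest_at x : 0 <= x <= 1 ->
  is_circle_integral (separated_rest m L x) (w i) r 0.
Proof.
  intros Hx.
  assert (HPx : poly_of_roots L x <> 0%C)
    by (apply poly_of_roots_neq0; intros b Hb; apply roots_off_neighbourhood; auto; lra).
  assert (Hfar : r < Cmod (RtoC x - w i))
    by (pose proof (proj2 (rho_admissible i Hi) x ltac:(lra)); lra).
  replace (RtoC 0) with (- (RtoC x ^ m * / poly_of_roots L x) * 0)%C by ring.
  eapply is_circle_integral_ext;
    [|apply is_circle_integral_scal, (is_circle_integral_inv_outside (w i) r x); auto; lra].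
  intros t; unfold separated_rest.
  pose proof (circle_minus_RtoC_neq0 t x ltac:(lra)) as Hxz.
  assert ((circle (w i) r t - x)%C <> 0%C)
    by (intro E; apply Hxz; rewrite <- Copp_minus_distr, E; ring).
  simpl Cpow; field; auto.
Qed.

Lemma is_circle_integral_separated_rest :
  is_circle_integral (fun z => CRInt (fun x => separated_rest m L x z) 0 1) (w i) r 0.
Proof.
  set (K := fun x t => (separated_rest m L x (circle (w i) r t) * circle' r t)%C).
  apply (is_CRInt_ext (fun t => CRInt (fun x => K x t) 0 1)).
  - intros t _; apply is_CRInt_unique; unfold K; rewrite Cmult_comm.
    apply (is_CRInt_ext (fun x => circle' r t * separated_rest m L x (circle (w i) r t))%C);
      [intros; ring | apply is_CRInt_scal, is_CRInt_CRInt; [lra|]].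
    intros x Hx; apply (ccontinuous_separated_rest m L (fun x => x) (fun _ => circle (w i) r t));
      [apply continuous_id | apply ccontinuous_const | apply circle_minus_RtoC_neq0; lra |].
    intros b Hb; apply roots_off_neighbourhood; auto; lra.
  - apply (is_CRInt_iterated_zero K 0 1 0 (2 * PI) rho); [lra | pose proof PI_RGT_0; lra | lra | |].
    + intros x t Hx; apply ccontinuous_mult.
      * apply (ccontinuous_separated_rest m L (fun q : R * R => fst q)
                 (fun q => circle (w i) r (snd q))); cbn [fst snd].
        -- apply continuous_fst.
        -- apply (ccontinuous_snd_comp (circle (w i) r)), ccontinuous_circle.
        -- apply circle_minus_RtoC_neq0; lra.
        -- intros b Hb; apply roots_off_neighbourhood; auto; lra.
      * apply (ccontinuous_snd_comp (circle' r)), ccontinuous_circle'.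
    + apply is_circle_integral_separated_rest_at.
Qed.

Lemma is_circle_integral_G_m (V : nat -> nat -> C) :
  (forall k, (k < length L)%nat -> inv_poly_residues n w (skipn k L) (V k)) ->
  is_circle_integral (G_m m n w N) (w i) r
    (two_pi_i * Csum (length L) (fun k => separated_coef m L k * V k i))%C.
Proof.
  intros HV.
  replace (two_pi_i * Csum (length L) (fun k => separated_coef m L k * V k i))%C
    with (0 + Csum (length L) (fun k => separated_coef m L k * (two_pi_i * V k i)))%C
    by (rewrite <- Csum_scal, Cplus_0_l; apply Csum_ext; intros; ring).
  apply (is_circle_integral_ext (fun z => CRInt (fun x => separated_rest m L x z) 0 1 +
     Csum (length L) (fun k => separated_coef m L k * / poly_of_roots (skipn k L) z))%C).
  - intros t; unfold G_m, Cdiv; rewrite hpoly_root_list; symmetry.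
    apply g_m_div_poly_of_roots.
    + intros b x Hb Hx; apply roots_off_neighbourhood; auto; lra.
    + apply circle_off_unit_segment.
    + intros b Hb; apply circle_minus_neq0, roots_centre_or_outside, Hb.
  - apply is_circle_integral_plus; [apply is_circle_integral_separated_rest|].
    apply is_circle_integral_Csum; intros k Hk; apply is_circle_integral_scal.
    apply (proj2 (HV k Hk)); auto.
    intros b Hb; apply roots_centre_or_outside; eapply In_skipn, Hb.
Qed.

End OnCircle.

Lemma residues_G_m : (1 <= n)%nat -> (forall i, (i < n)%nat -> (1 <= N i)%nat) ->
  exists c : nat -> C,
    (forall i r, (i < n)%nat -> 0 < r < rho ->
       is_circle_integral (G_m m n w N) (w i) r (two_pi_i * c i)%C) /\
    is_CRInt (fun x => RtoC x ^ m / hpoly n w N x)%C 0 1 (Csum n c).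
Proof.
  intros Hn HN; set (d := length L).
  assert (HL : L <> nil) by now apply root_list_neq_nil.
  assert (Hd : (1 <= d)%nat) by (unfold d; destruct L; [easy | simpl; lia]).
  destruct (choice (fun k v => (k < d)%nat -> inv_poly_residues n w (skipn k L) v)) as [V HV].
  { intros k; destruct (Nat.lt_ge_cases k d) as [Hk|Hk]; [|exists (fun _ => 0%C); lia].
    destruct (inv_poly_residues_exist n w w_inj (skipn k L)) as [v Hv]; [| |now exists v].
    - intros E; apply (f_equal (@length C)) in E; rewrite length_skipn in E; simpl in E; lia.
    - intros b Hb; apply (In_root_list w N n), (In_skipn k), Hb. }
  exists (fun i => Csum d (fun k => separated_coef m L k * V k i))%C; split.
  - intros i r Hi Hr; now apply is_circle_integral_G_m.
  - rewrite Csum_comm.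
    rewrite (Csum_ext _ _ (fun k => separated_coef m L k * (if (d - k =? 1)%nat then 1 else 0)))%C.
    2: { intros k Hk; rewrite Csum_scal, (proj1 (HV k Hk)), length_skipn; reflexivity. }
    rewrite (Csum_single _ _ (pred d)) by (lia || (intros k Hk Hkd;
      replace (d - k =? 1)%nat with false by (symmetry; apply Nat.eqb_neq; lia); ring)).
    replace (d - pred d =? 1)%nat with true by (symmetry; apply Nat.eqb_eq; lia).
    replace (separated_coef m L (pred d) * 1)%C with (separated_coef m L (pred d)) by ring.
    eapply is_CRInt_ext; [|apply is_CRInt_separated_coef].
    + intros x _; unfold Cdiv; rewrite hpoly_root_list; fold L.
      now replace (S (pred d)) with (length L) by (unfold d in *; lia); rewrite firstn_all.
    + intros b x Hb Hx; apply roots_off_neighbourhood; auto; lra.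
Qed.

End Residues.

Theorem theorem1 (n : nat) (w : nat -> C) (N : nat -> nat) (m : nat)
  (Hn : (1 <= n)%nat)
  (Hdist : forall i j, (i < n)%nat -> (j < n)%nat -> i <> j -> w i <> w j)
  (Hseg : forall i, (i < n)%nat -> ~ (Im (w i) = 0 /\ 0 <= Re (w i) <= 1))
  (HN : forall i, (i < n)%nat -> (1 <= N i)%nat) :
  (forall i, (i < n)%nat -> exists c, is_residue (G_m m n w N) (w i) c) /\
  (forall c : nat -> C,
     (forall i, (i < n)%nat -> is_residue (G_m m n w N) (w i) (c i)) ->
     @is_RInt C_R_NormedModule
       (fun x : R => Cdiv (Cpow (RtoC x) m) (hpoly n w N (RtoC x)))
       0 1 (Csum n c)).
Proof.
  destruct (admissible_radius_exists n w Hdist Hseg) as [rho [Hrho Hadm]].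
  destruct (residues_G_m n m w N rho Hdist Hrho Hadm Hn HN) as [c0 [Hcircle Hint]].
  split.
  - intros i Hi; exists (c0 i); apply is_residue_circle_integral.
    exists rho; split; [exact Hrho|]; intros r Hr; now apply Hcircle.
  - intros c Hc; replace (Csum n c) with (Csum n c0); [exact Hint|].
    apply Csum_ext; intros i Hi; symmetry.
    apply (is_residue_unique _ _ _ _ rho Hrho (Hc i Hi)); intros r Hr; now apply Hcircle.
Qed.
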